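(* Assume the setting below. There exist $\varepsilon\in(0,1)$ and $C>1$ such that $\|\mathcal L_s^n\|_b\le C$ for all $s=\sigma+ib$ with $|\sigma|<\varepsilon$ and all $n\ge1$, where $\|\cdot\|_b$ is the operator norm on $C^\alpha_{\mathrm{loc}}(\Delta)$ induced by $\|\psi\|_b$.
   Context: Setting: $\alpha\in(0,1]$, $\Delta=[0,1]$, $\mathcal P$ countable Lebesgue-mod-0 partition into open intervals, $F$ full-branch and $C^{1+\alpha}$ on each element, $\mathcal H,\mathcal H_n$ inverse branches of $F,F^n$, with constants $C_0>0,\rho\in(0,1)$ such that $|h'|_\infty\le C_0\rho^n$ ($h\in\mathcal H_n$), $|\log|h'||_\alpha\le C_0$ ($h\in\mathcal H$); $r:\Delta\to(0,\infty)$ $C^1$ on elements of $\mathcal P$ with $|(r\circ h)'|_\infty\le C_0$ and $\sum_{h\in\mathcal H}e^{\varepsilon_0|r\circ h|_\infty}|h'|_\infty<\infty$ for some $\varepsilon_0>0$. $C^\alpha_{\mathrm{loc}}(\Delta)$: complex $\psi$ with $|\psi|_\infty+|\psi|_{\alpha,\mathrm{loc}}<\infty$, $|\psi|_{\alpha,\mathrm{loc}}=\sup_{h\in\mathcal H}\sup_{x\ne y}|\psi(hx)-\psi(hy)|/|x-y|^\alpha$; $\|\psi\|_b=\max\{|\psi|_\infty,|\psi|_{\alpha,\mathrm{loc}}/(1+|b|^\alpha)\}$. $P_s\psi=\sum_{h\in\mathcal H}e^{-sr\circ h}|h'|\psi\circ h$. For real $|\sigma|<\varepsilon$, $\lambda_\sigma>0$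 and $f_\sigma>0$ are the continuous families of simple leading eigenvalue and $\alpha$-Hölder eigenfunction of $P_\sigma$ ($\lambda_0=1$), with $\varepsilon$ small so that $1/2\le\lambda_\sigma\le2$, $f_0/2\le f_\sigma\le2f_0$, $|f_0|_\alpha/2\le|f_\sigma|_\alpha\le2|f_0|_\alpha$; $\mathcal L_s\psi=(\lambda_\sigma f_\sigma)^{-1}P_s(f_\sigma\psi)$ for $s=\sigma+ib$. *)

From Stdlib Require Import Reals Lra List.
From Coquelicot Require Import Coquelicot.
Open Scope R_scope.

(* The open interval (0,1): Delta = [0,1] taken mod 0. *)
Definition in01 (x : R) : Prop := 0 < x < 1.

Definition rpow (x a : R) : R :=
  match Rle_dec x 0 with left _ => 0 | right _ => Rpower x a end.

Definition null_set (A : R -> Prop) : Prop :=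
  forall eps, 0 < eps ->
  exists c d : nat -> R,
    (forall n, c n <= d n) /\
    (forall x, A x -> exists n, c n < x < d n) /\
    (forall N, sum_f_R0 (fun n => d n - c n) N <= eps).

Definition Cexp (z : C) : C :=
  (exp (fst z) * cos (snd z), exp (fst z) * sin (snd z)).

Definition csum (u : nat -> C) : C :=
  (Series (fun n => fst (u n)), Series (fun n => snd (u n))).

Definition branch (h : nat -> R -> R) (w : list nat) : R -> R :=
  fold_right (fun i g => fun x => h i (g x)) (fun x => x) w.

Definition Pop (I : nat -> bool) (h : nat -> R -> R) (r : R -> R)
    (s : C) (psi : R -> C) (x : R) : C :=
  csum (fun i => if I i then
      Cmult (Cmult (Cexp (Copp (Cmult s (RtoC (r (h i x))))))
                   (RtoC (Rabs (Derive (h i) x))))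
            (psi (h i x))
    else RtoC 0).

Definition Lop (I : nat -> bool) (h : nat -> R -> R) (r : R -> R)
    (lam : R -> R) (f : R -> R -> R) (s : C) (psi : R -> C) (x : R) : C :=
  Cmult (RtoC (/ (lam (fst s) * f (fst s) x)))
        (Pop I h r s (fun y => Cmult (RtoC (f (fst s) y)) (psi y)) x).

Definition bounded_set (E : R -> Prop) : Prop :=
  exists M, forall y, E y -> y <= M.

Definition sup_set (psi : R -> C) : R -> Prop :=
  fun y => exists x, in01 x /\ y = Cmod (psi x).

Definition holder_loc_set (I : nat -> bool) (h : nat -> R -> R) (alpha : R)
    (psi : R -> C) : R -> Prop :=
  fun y => exists i x z, I i = true /\ in01 x /\ in01 z /\ x <> z /\
    y = Cmod (Cminus (psi (h i x)) (psi (h i z))) / Rpower (Rabs (x - z)) alpha.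

Definition sup_norm (psi : R -> C) : R := real (Lub_Rbar (sup_set psi)).
Definition holder_loc (I : nat -> bool) (h : nat -> R -> R) (alpha : R)
    (psi : R -> C) : R := real (Lub_Rbar (holder_loc_set I h alpha psi)).

Definition in_Calpha (I : nat -> bool) (h : nat -> R -> R) (alpha : R)
    (psi : R -> C) : Prop :=
  bounded_set (sup_set psi) /\ bounded_set (holder_loc_set I h alpha psi).

Definition normb (I : nat -> bool) (h : nat -> R -> R) (alpha b : R)
    (psi : R -> C) : R :=
  Rmax (sup_norm psi) (holder_loc I h alpha psi / (1 + rpow (Rabs b) alpha)).

Definition holder_set (alpha : R) (g : R -> R) : R -> Prop :=
  fun y => exists x z, in01 x /\ in01 z /\ x <> z /\
    y = Rabs (g x - g z) / Rpower (Rabs (x - z)) alpha.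
Definition holder_semi (alpha : R) (g : R -> R) : R :=
  real (Lub_Rbar (holder_set alpha g)).

Definition Setting (alpha C0 rho eps0 : R) (I : nat -> bool) (a b : nat -> R)
    (F : R -> R) (h : nat -> R -> R) (r : R -> R) : Prop :=
  (0 < alpha <= 1) /\ 0 < C0 /\ (0 < rho < 1) /\ 0 < eps0 /\
  (* P: countable mod-0 partition of [0,1] into open intervals (a i, b i), i in I *)
  (forall i, I i = true -> 0 <= a i < b i /\ b i <= 1) /\
  (forall i j, I i = true -> I j = true -> i <> j -> b i <= a j \/ b j <= a i) /\
  null_set (fun x => 0 <= x <= 1 /\ forall i, I i = true -> ~ (a i < x < b i)) /\
  (forall i, I i = true ->
     (forall y, a i < y < b i -> ex_derive F y) /\
     exists K, forall y z, a i < y < b i -> a i < z < b i ->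
       Rabs (Derive F y - Derive F z) <= K * rpow (Rabs (y - z)) alpha) /\
  (forall i, I i = true ->
     (forall x, in01 x -> a i < h i x < b i /\ F (h i x) = x /\
                 ex_derive (h i) x /\ Derive (h i) x <> 0) /\
     (forall y, a i < y < b i -> in01 (F y) /\ h i (F y) = y)) /\
  (forall (n : nat) (w : list nat), (1 <= n)%nat -> length w = n ->
     (forall i, In i w -> I i = true) ->
     forall x, in01 x -> ex_derive (branch h w) x /\
       Rabs (Derive (branch h w) x) <= C0 * rho ^ n) /\
  (forall i, I i = true -> forall x y, in01 x -> in01 y -> x <> y ->
     Rabs (ln (Rabs (Derive (h i) x)) - ln (Rabs (Derive (h i) y)))
       / Rpower (Rabs (x - y)) alpha <= C0) /\
  (forall x, 0 <= x <= 1 -> 0 < r x) /\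
  (forall i, I i = true -> forall y, a i < y < b i ->
     ex_derive r y /\ continuous (Derive r) y) /\
  (forall i, I i = true -> forall x, in01 x ->
     ex_derive (fun t => r (h i t)) x /\
     Rabs (Derive (fun t => r (h i t)) x) <= C0) /\
  (* sum_{h in H} e^{eps0 |r o h|_infty} |h'|_infty < oo *)
  (exists Rb Db : nat -> R,
     (forall i, I i = true -> forall x, in01 x ->
        Rabs (r (h i x)) <= Rb i /\ Rabs (Derive (h i) x) <= Db i) /\
     ex_series (fun i => if I i then exp (eps0 * Rb i) * Db i else 0)).

(* lam_sigma, f_sigma: continuous families of simple leading eigenvalue and
   alpha-Hoelder eigenfunction of P_sigma for |sigma| < eps1, with the
   smallness normalisations of the setting. *)
Definition EigenFamily (alpha eps0 : R) (I : nat -> bool) (h : nat -> R -> R)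
    (r : R -> R) (lam : R -> R) (f : R -> R -> R) (eps1 : R) : Prop :=
  0 < eps1 /\ eps1 <= eps0 /\
  lam 0 = 1 /\
  (forall sigma, Rabs sigma < eps1 ->
     0 < lam sigma /\
     (forall x, in01 x -> 0 < f sigma x) /\
     bounded_set (holder_set alpha (f sigma)) /\
     (forall x, in01 x ->
        Pop I h r (RtoC sigma) (fun y => RtoC (f sigma y)) x
          = RtoC (lam sigma * f sigma x)) /\
     (forall (mu : C) (psi : R -> C), in_Calpha I h alpha psi ->
        (exists x, in01 x /\ psi x <> RtoC 0) ->
        (forall x, in01 x -> Pop I h r (RtoC sigma) psi x = Cmult mu (psi x)) ->
        Cmod mu <= lam sigma /\
        (mu = RtoC (lam sigma) ->
           exists c : C, forall x, in01 x -> psi x = Cmult c (RtoC (f sigma x)))) /\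
     (/ 2 <= lam sigma <= 2) /\
     (forall x, in01 x -> f 0 x / 2 <= f sigma x <= 2 * f 0 x) /\
     (holder_semi alpha (f 0) / 2 <= holder_semi alpha (f sigma)
        <= 2 * holder_semi alpha (f 0))) /\
  (forall sigma0, Rabs sigma0 < eps1 -> forall eta, 0 < eta ->
     exists delta, 0 < delta /\ forall sigma, Rabs sigma < eps1 ->
       Rabs (sigma - sigma0) < delta ->
       Rabs (lam sigma - lam sigma0) < eta /\
       (forall x, in01 x -> Rabs (f sigma x - f sigma0 x) < eta) /\
       holder_semi alpha (fun x => f sigma x - f sigma0 x) < eta).

Definition Lpow (I : nat -> bool) (h : nat -> R -> R) (r : R -> R)
    (lam : R -> R) (f : R -> R -> R) (s : C) (n : nat) (psi : R -> C) : R -> C :=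
  Nat.iter n (Lop I h r lam f s) psi.

(** Dividing by the leading eigendata makes [L_sigma] a Markov operator, so [L_s] never
    increases the sup norm. For the Hoelder part, distances are measured by
    [d(x,z) = sup_w |h_w x - h_w z| / rho^|w|], which is comparable to [|x - z|] and is
    contracted by [rho] under every inverse branch. With respect to [d^alpha], [L_s] satisfies a
    Lasota-Yorke inequality [|L_s psi|_d <= rho^alpha |psi|_d + B (1 + |b|^alpha) |psi|_oo],
    where [B] depends on the distortion of the branches and on upper, lower and Hoelder bounds
    for [f_sigma]; iterating it bounds [|L_s^n psi|_d] uniformly in [n]. The lower bound
    [f_0 >= m0 > 0] follows from [f_0 >= |h_w'| f_0 o h_w] along high powers of a periodic word:
    a periodic point exists by the intermediate value theorem once there are two branches, and
    a single branch is impossible because then [f_0 = |(h^n)'| f_0 o h^n -> 0]. *)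

From Stdlib Require Import Reals Lra Lia List Classical.
From Coquelicot Require Import Coquelicot.
Open Scope R_scope.

Lemma exp_le_compat u v : u <= v -> exp u <= exp v.
Proof. intros [H|H]; [left; apply exp_increasing, H | right; rewrite H; reflexivity]. Qed.

Lemma rpow_Rpower x a : 0 < x -> rpow x a = Rpower x a.
Proof. intros Hx. unfold rpow. destruct (Rle_dec x 0); [lra | reflexivity]. Qed.

Lemma rpow_0_l a : rpow 0 a = 0.
Proof. unfold rpow. destruct (Rle_dec 0 0); [reflexivity | lra]. Qed.

Lemma rpow_ge_0 x a : 0 <= rpow x a.
Proof. unfold rpow. destruct (Rle_dec x 0); [lra | left; apply exp_pos]. Qed.

Lemma rpow_le_compat x y a : 0 <= a -> 0 <= x <= y -> rpow x a <= rpow y a.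
Proof.
  intros Ha [Hx Hxy]. destruct (Req_dec x 0) as [->|Hx0].
  - rewrite rpow_0_l; apply rpow_ge_0.
  - rewrite !rpow_Rpower by lra. apply Rle_Rpower_l; lra.
Qed.

Lemma rpow_mult_distr x y a : 0 <= x -> 0 <= y -> rpow (x * y) a = rpow x a * rpow y a.
Proof.
  intros Hx Hy. destruct (Req_dec x 0) as [->|Hx0].
  { rewrite Rmult_0_l, rpow_0_l; ring. }
  destruct (Req_dec y 0) as [->|Hy0].
  { rewrite Rmult_0_r, rpow_0_l; ring. }
  rewrite !rpow_Rpower by (try apply Rmult_lt_0_compat; lra).
  rewrite Rpower_mult_distr; lra.
Qed.

Lemma rpow_exp_ln x a : 0 < x -> rpow x a = exp (a * ln x).
Proof. intros Hx. rewrite rpow_Rpower by lra. reflexivity. Qed.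

Lemma rpow_ge_self x a : 0 < a <= 1 -> 0 <= x <= 1 -> x <= rpow x a.
Proof.
  intros Ha Hx. destruct (Req_dec x 0) as [->|Hx0]; [rewrite rpow_0_l; lra|].
  destruct (Req_dec x 1) as [->|Hx1].
  { rewrite rpow_exp_ln, ln_1, Rmult_0_r, exp_0 by lra. lra. }
  assert (Hln : ln x < 0) by (rewrite <- ln_1; apply ln_increasing; lra).
  rewrite rpow_exp_ln, <- (exp_ln x) at 1 by lra.
  apply exp_le_compat. nra.
Qed.

Lemma rpow_le_1 x a : 0 <= a -> 0 <= x <= 1 -> rpow x a <= 1.
Proof.
  intros Ha Hx. destruct (Req_dec x 0) as [->|Hx0]; [rewrite rpow_0_l; lra|].
  assert (Hln : ln x <= 0).
  { destruct (Req_dec x 1) as [->|]; [rewrite ln_1; lra|].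
    left; rewrite <- ln_1; apply ln_increasing; lra. }
  rewrite rpow_exp_ln, <- exp_0 by lra. apply exp_le_compat. nra.
Qed.

Lemma rpow_ge_1 x a : 0 <= a -> 1 <= x -> 1 <= rpow x a.
Proof.
  intros Ha Hx.
  assert (Hln : 0 <= ln x) by (rewrite <- ln_1; apply ln_le; lra).
  rewrite rpow_exp_ln, <- exp_0 by lra. apply exp_le_compat. nra.
Qed.

Lemma Rmin_2_le_rpow X a : 0 < a <= 1 -> 0 <= X -> Rmin X 2 <= 2 * rpow X a.
Proof.
  intros Ha HX. destruct (Rle_dec X 1).
  - pose proof (rpow_ge_self X a Ha ltac:(lra)). pose proof (Rmin_l X 2). lra.
  - pose proof (rpow_ge_1 X a ltac:(lra) ltac:(lra)). pose proof (Rmin_r X 2). lra.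
Qed.

Lemma rpow_small_near_0 eta a : 0 < a -> 0 < eta ->
  exists d, 0 < d /\ forall y, 0 <= y <= d -> rpow y a <= eta.
Proof.
  intros Ha He. exists (Rpower eta (/ a)). split; [apply exp_pos|].
  intros y Hy. eapply Rle_trans; [apply rpow_le_compat; [lra | exact Hy]|].
  rewrite rpow_Rpower, Rpower_mult, Rinv_l, Rpower_1 by (try apply exp_pos; lra). lra.
Qed.

Lemma le_mult_rpow_of_div_le v K t a : 0 < t -> v / Rpower t a <= K -> v <= K * rpow t a.
Proof.
  intros Ht H. rewrite rpow_Rpower by lra.
  pose proof (exp_pos (a * ln t)) as Hp. unfold Rpower in *.
  apply (Rmult_le_compat_r (exp (a * ln t))) in H; [|lra].
  unfold Rdiv in H. rewrite Rmult_assoc, Rinv_l, Rmult_1_r in H by lra. exact H.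
Qed.

Lemma MVT_Rabs (g : R -> R) x z :
  (forall t, Rmin x z <= t <= Rmax x z -> ex_derive g t) ->
  exists c, Rmin x z <= c <= Rmax x z /\ Rabs (g x - g z) = Rabs (Derive g c) * Rabs (x - z).
Proof.
  intros H.
  assert (Hin : forall t, Rmin z x <= t <= Rmax z x -> Rmin x z <= t <= Rmax x z)
    by (intros t; rewrite Rmin_comm, Rmax_comm; auto).
  destruct (MVT_gen g z x (Derive g)) as [c [Hc ->]].
  - intros t Ht. apply Derive_correct, H, Hin. unfold Rmin, Rmax in *.
    destruct (Rle_dec z x); lra.
  - intros t Ht. apply continuity_pt_filterlim, (@ex_derive_continuous R_AbsRing R_NormedModule).
    apply H, Hin, Ht.
  - exists c. split; [apply Hin, Hc|]. rewrite Rabs_mult, (Rabs_minus_sym x z). reflexivity.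
Qed.

Lemma MVT_Rabs_le (g : R -> R) K x z :
  (forall t, Rmin x z <= t <= Rmax x z -> ex_derive g t /\ Rabs (Derive g t) <= K) ->
  Rabs (g x - g z) <= K * Rabs (x - z).
Proof.
  intros H. destruct (MVT_Rabs g x z) as [c [Hc ->]]; [intros t Ht; apply H, Ht|].
  apply Rmult_le_compat_r; [apply Rabs_pos | apply H, Hc].
Qed.

Lemma MVT_Rabs_ge (g : R -> R) K x z :
  (forall t, Rmin x z <= t <= Rmax x z -> ex_derive g t /\ K <= Rabs (Derive g t)) ->
  K * Rabs (x - z) <= Rabs (g x - g z).
Proof.
  intros H. destruct (MVT_Rabs g x z) as [c [Hc ->]]; [intros t Ht; apply H, Ht|].
  apply Rmult_le_compat_r; [apply Rabs_pos | apply H, Hc].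
Qed.

Lemma in01_between x z t : in01 x -> in01 z -> Rmin x z <= t <= Rmax x z -> in01 t.
Proof. unfold in01, Rmin, Rmax. intros. destruct (Rle_dec x z); lra. Qed.

Lemma MVT_Rabs_le_in01 (g : R -> R) K x z :
  (forall t, in01 t -> ex_derive g t /\ Rabs (Derive g t) <= K) -> in01 x -> in01 z ->
  Rabs (g x - g z) <= K * Rabs (x - z).
Proof. intros H Hx Hz. apply MVT_Rabs_le. intros t Ht. apply H, (in01_between x z); auto. Qed.

Lemma MVT_Rabs_ge_in01 (g : R -> R) K x z :
  (forall t, in01 t -> ex_derive g t /\ K <= Rabs (Derive g t)) -> in01 x -> in01 z ->
  K * Rabs (x - z) <= Rabs (g x - g z).
Proof. intros H Hx Hz. apply MVT_Rabs_ge. intros t Ht. apply H, (in01_between x z); auto. Qed.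

Lemma in01_dist x z : in01 x -> in01 z -> Rabs (x - z) <= 1.
Proof. unfold in01; intros. apply Rabs_le; lra. Qed.

Lemma Rabs_exp_sub_1_le u : Rabs (exp u - 1) <= Rabs u * exp (Rabs u).
Proof.
  rewrite <- exp_0, Rmult_comm.
  replace (Rabs u) with (Rabs (u - 0)) at 2 by (f_equal; ring).
  apply MVT_Rabs_le. intros t Ht. split; [eexists; apply is_derive_exp|].
  rewrite (is_derive_unique _ _ _ (is_derive_exp t)), Rabs_pos_eq by (left; apply exp_pos).
  apply exp_le_compat. unfold Rmin, Rmax in Ht.
  destruct (Rle_dec u 0); unfold Rabs; destruct (Rcase_abs u); lra.
Qed.

Lemma Rabs_exp_sub_1_le_exp u K : Rabs u <= K -> Rabs (exp u - 1) <= Rabs u * exp K.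
Proof.
  intros Hu. eapply Rle_trans; [apply Rabs_exp_sub_1_le|].
  apply Rmult_le_compat_l; [apply Rabs_pos | apply exp_le_compat; lra].
Qed.

Lemma Rabs_cos_sub_le u v : Rabs (cos u - cos v) <= Rabs (u - v).
Proof.
  rewrite <- (Rmult_1_l (Rabs (u - v))). apply MVT_Rabs_le. intros t _.
  split; [eexists; apply is_derive_cos|].
  rewrite (is_derive_unique _ _ _ (is_derive_cos t)), Rabs_Ropp. apply Rabs_le, SIN_bound.
Qed.

Lemma Rabs_sin_sub_le u v : Rabs (sin u - sin v) <= Rabs (u - v).
Proof.
  rewrite <- (Rmult_1_l (Rabs (u - v))). apply MVT_Rabs_le. intros t _.
  split; [eexists; apply is_derive_sin|].
  rewrite (is_derive_unique _ _ _ (is_derive_sin t)). apply Rabs_le, COS_bound.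
Qed.

Lemma Lub_Rbar_le (E : R -> Prop) M : (forall y, E y -> y <= M) -> 0 <= M -> real (Lub_Rbar E) <= M.
Proof.
  intros HE HM. destruct (Lub_Rbar_correct E) as [_ Hl].
  assert (Hm : Rbar_le (Lub_Rbar E) M) by (apply Hl; intros y Hy; apply HE, Hy).
  destruct (Lub_Rbar E); simpl in *; auto; contradiction.
Qed.

Lemma le_Lub_Rbar (E : R -> Prop) y : bounded_set E -> E y -> y <= real (Lub_Rbar E).
Proof.
  intros [M HE] Hy. destruct (Lub_Rbar_correct E) as [Hub Hl].
  assert (Hm : Rbar_le (Lub_Rbar E) M) by (apply Hl; intros z Hz; apply HE, Hz).
  pose proof (Hub y Hy).
  destruct (Lub_Rbar E); simpl in *; auto; contradiction.
Qed.

Lemma Series_0 : Series (fun _ => 0) = 0.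
Proof. rewrite (Series_ext _ (fun n => 0 * 0)) by (intros; ring). rewrite Series_scal_l. ring. Qed.

Lemma ex_series_0 : ex_series (fun _ => 0).
Proof.
  apply (ex_series_ext (fun n => scal 0 ((1/2) ^ n))).
  - intros n. apply Rmult_0_l.
  - apply (@ex_series_scal_l R_AbsRing R_NormedModule), ex_series_geom. rewrite Rabs_pos_eq; lra.
Qed.

Lemma dist_le_rpow_in01 x z a : 0 < a <= 1 -> in01 x -> in01 z ->
  Rabs (x - z) <= rpow (Rabs (x - z)) a.
Proof. intros. apply rpow_ge_self; auto. split; [apply Rabs_pos | apply in01_dist; auto]. Qed.

Lemma rpow_dist_le_1_in01 x z a : 0 <= a -> in01 x -> in01 z -> rpow (Rabs (x - z)) a <= 1.
Proof. intros. apply rpow_le_1; auto. split; [apply Rabs_pos | apply in01_dist; auto]. Qed.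

Lemma Rabs_sub_le_of_ln_sub D D' u K : 0 < D -> 0 < D' ->
  Rabs (ln D' - ln D) <= u -> u <= K -> Rabs (D - D') <= D * (u * exp K) /\ D' <= D * exp K.
Proof.
  intros HD HD' Hu HK. set (v := ln D' - ln D) in Hu |- *.
  assert (E : D' = D * exp v)
    by (unfold v, Rminus; rewrite exp_plus, exp_Ropp, !exp_ln by lra; field; lra).
  rewrite E. split.
  - replace (D - D * exp v) with (- (D * (exp v - 1))) by ring.
    rewrite Rabs_Ropp, Rabs_mult, (Rabs_pos_eq D) by lra. apply Rmult_le_compat_l; [lra|].
    eapply Rle_trans; [apply (Rabs_exp_sub_1_le_exp v K); lra|].
    apply Rmult_le_compat_r; [left; apply exp_pos | exact Hu].
  - apply Rmult_le_compat_l; [lra | apply exp_le_compat; pose proof (Rle_abs v); lra].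
Qed.

Lemma Cmod_le_Rabs_sum (p : C) : Cmod p <= Rabs (fst p) + Rabs (snd p).
Proof.
  pose proof (Rabs_pos (fst p)). pose proof (Rabs_pos (snd p)).
  unfold Cmod. rewrite <- (sqrt_pow2 (Rabs (fst p) + Rabs (snd p))) by lra.
  apply sqrt_le_1_alt. rewrite <- (pow2_abs (fst p)), <- (pow2_abs (snd p)). nra.
Qed.

Lemma Cmod_polar E t : 0 <= E -> Cmod (E * cos t, E * sin t) = E.
Proof.
  intros HE0. unfold Cmod; cbn [fst snd]. pose proof (sin2_cos2 t) as Hs. unfold Rsqr in Hs.
  replace ((E * cos t) ^ 2 + (E * sin t) ^ 2) with (E ^ 2 * (sin t * sin t + cos t * cos t)) by ring.
  rewrite Hs, Rmult_1_r. apply sqrt_pow2; auto.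
Qed.

Lemma Rabs_scaled_sub_le (g : R -> R) E E' th th' X a :
  (forall u v, Rabs (g u - g v) <= Rabs (u - v)) -> (forall u, Rabs (g u) <= 1) ->
  0 < a <= 1 -> 0 <= E -> Rabs (th - th') <= X ->
  Rabs (E * g th - E' * g th') <= E * (2 * rpow X a) + Rabs (E - E').
Proof.
  intros Hlip Hb Ha HE Hth.
  replace (E * g th - E' * g th') with (E * (g th - g th') + (E - E') * g th') by ring.
  eapply Rle_trans; [apply Rabs_triang|]. rewrite !Rabs_mult, (Rabs_pos_eq E) by auto.
  apply Rplus_le_compat.
  - apply Rmult_le_compat_l; auto.
    eapply Rle_trans; [|apply Rmin_2_le_rpow; auto; eapply Rle_trans; [apply Rabs_pos | exact Hth]].
    apply Rmin_glb; [eapply Rle_trans; [apply Hlip | exact Hth]|].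
    eapply Rle_trans; [apply Rabs_triang|]. rewrite Rabs_Ropp.
    pose proof (Hb th); pose proof (Hb th'); lra.
  - rewrite <- (Rmult_1_r (Rabs (E - E'))) at 2.
    apply Rmult_le_compat_l; [apply Rabs_pos | apply Hb].
Qed.

Lemma exists_fixed_point_ivt (g : R -> R) x1 x2 :
  (forall t, in01 t -> ex_derive g t) -> in01 x1 -> in01 x2 -> x1 < x2 ->
  x1 <= g x1 -> g x2 <= x2 -> exists p, in01 p /\ g p = p.
Proof.
  intros Hg H1 H2 H12 Hg1 Hg2.
  destruct (Req_dec (g x1) x1) as [E|E]; [exists x1; auto|].
  destruct (Req_dec (g x2) x2) as [E2|E2]; [exists x2; auto|].
  destruct (Ranalysis5.IVT_interv (fun t => t - g t) x1 x2) as [p [Hp Hpe]]; try lra.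
  - intros t Ht. assert (Ht' : in01 t) by (unfold in01 in *; lra).
    apply continuity_pt_filterlim, (@ex_derive_continuous R_AbsRing R_NormedModule (fun u => u - g u)).
    pose proof (Hg t Ht'). auto_derive. auto.
  - exists p. split; [unfold in01 in *; lra | lra].
Qed.

Lemma expanding_pos_sum_ge (g : R -> R) c x z :
  (forall t, in01 t -> ex_derive g t /\ c <= Rabs (Derive g t) /\ 0 < g t) ->
  in01 x -> in01 z -> c * Rabs (x - z) <= g x + g z.
Proof.
  intros Hg Hx Hz. eapply Rle_trans; [apply (MVT_Rabs_ge_in01 g c); auto|].
  - intros t Ht. pose proof (Hg t Ht). tauto.
  - pose proof (Hg x Hx); pose proof (Hg z Hz). apply Rabs_le; lra.
Qed.

(* Either [g >= eta] near [0], and [g] crosses the diagonal; or [g t0 < eta] for some small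
   [t0], and then expansion forces [g >= eta] on the range of [k], so [g o k] crosses it. *)
Lemma exists_fixed_point_pair (g k : R -> R) c bg ak :
  0 < c -> 0 < ak -> bg < 1 ->
  (forall t, in01 t -> ex_derive g t /\ c <= Rabs (Derive g t) /\ 0 < g t < bg) ->
  (forall t, in01 t -> ex_derive k t /\ ak < k t < 1) ->
  exists p, in01 p /\ (g p = p \/ g (k p) = p).
Proof.
  intros Hc Hak Hbg Hg Hk.
  assert (Hgap : forall x z, in01 x -> in01 z -> c * Rabs (x - z) <= g x + g z).
  { intros x z. apply expanding_pos_sum_ge. intros t Ht. pose proof (Hg t Ht). tauto. }
  pose proof (Hg (1/2) ltac:(unfold in01; lra)) as Hg_half.
  pose proof (Hk (1/2) ltac:(unfold in01; lra)) as Hk_half.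
  set (eta := c * ak / 4). set (tau := Rmin (ak / 2) (c * ak / 8)).
  assert (Htau : 0 < tau <= ak / 2 /\ tau <= c * ak / 8).
  { unfold tau. split; [split|]; [apply Rmin_glb_lt; nra | apply Rmin_l | apply Rmin_r]. }
  set (x2 := (1 + bg) / 2).
  assert (Hx2 : in01 x2) by (unfold x2, in01; lra).
  assert (Hgx2 : forall u, in01 u -> g u < x2) by (intros u Hu; pose proof (Hg u Hu); unfold x2; lra).
  destruct (classic (forall t, 0 < t <= tau -> eta <= g t)) as [Hnear0|Hfar].
  - destruct (exists_fixed_point_ivt g tau x2) as [p [Hp Hpe]]; try (unfold in01, x2; lra).
    + intros t Ht; apply Hg, Ht.
    + pose proof (Hnear0 tau ltac:(lra)). unfold eta in *; nra.
    + left; apply Hgx2; auto.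
    + exists p; auto.
  - apply not_all_ex_not in Hfar as [t0 Ht0].
    apply imply_to_and in Ht0 as [Ht0 Hgt0]. apply Rnot_le_lt in Hgt0.
    assert (Hgk : forall x, in01 x -> eta <= g (k x)).
    { intros x Hx. pose proof (Hk x Hx) as [_ Hkx].
      assert (Ht0' : in01 t0) by (unfold in01; lra).
      pose proof (Hgap (k x) t0 ltac:(unfold in01; lra) Ht0') as Hsum.
      rewrite Rabs_pos_eq in Hsum by lra. unfold eta in *; nra. }
    set (x1 := Rmin eta (1 / 2) / 2).
    assert (Hx1 : 0 < x1 <= eta / 2 /\ x1 <= 1 / 4).
    { unfold x1. pose proof (Rmin_l eta (1/2)). pose proof (Rmin_r eta (1/2)).
      assert (0 < Rmin eta (1/2)) by (apply Rmin_glb_lt; unfold eta; nra). lra. }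
    destruct (exists_fixed_point_ivt (fun x => g (k x)) x1 x2) as [p [Hp Hpe]];
      try (unfold in01, x2; lra).
    + intros t Ht. pose proof (Hk t Ht) as [Hdk Hkt].
      apply ex_derive_comp; [apply Hg; unfold in01; lra | exact Hdk].
    + pose proof (Hgk x1 ltac:(unfold in01; lra)). lra.
    + left; apply Hgx2. pose proof (Hk x2 Hx2). unfold in01; lra.
    + exists p; auto.
Qed.

Lemma Series_le_compat (u v : nat -> R) :
  (forall n, u n <= v n) -> ex_series u -> ex_series v -> Series u <= Series v.
Proof.
  intros H Hu Hv. cut (0 <= Series v - Series u); [lra|].
  rewrite <- Series_minus, <- Series_0 by auto.
  apply Series_le; [intros n; specialize (H n); lra | apply (ex_series_minus v u); auto].
Qed.

Lemma Series_ge_term (u : nat -> R) j : (forall n, 0 <= u n) -> ex_series u -> u j <= Series u.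
Proof.
  intros H Hu. rewrite (Series_incr_n u (S j)) by (auto; lia). simpl pred.
  assert (u j <= sum_f_R0 u j).
  { destruct j; simpl; [lra|]. pose proof (cond_pos_sum u j H). lra. }
  assert (0 <= Series (fun k => u (S j + k)%nat)).
  { rewrite <- Series_0. apply Series_le_compat; auto using ex_series_0.
    apply (ex_series_incr_n u (S j)); auto. }
  lra.
Qed.

Lemma Series_single_term (u : nat -> R) j : (forall k, k <> j -> u k = 0) -> Series u = u j.
Proof.
  intros H.
  assert (Htail : forall k, u (S j + k)%nat = 0) by (intros k; apply H; lia).
  assert (Hhead : forall m, (m < j)%nat -> sum_f_R0 u m = 0).
  { induction m; intros Hm; simpl; [apply H; lia|]. rewrite IHm, H by lia. ring. }
  assert (Hu : ex_series u).
  { apply (ex_series_incr_n u (S j)), (ex_series_ext (fun _ => 0)); auto using ex_series_0. }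
  rewrite (Series_incr_n u (S j)), (Series_ext _ (fun _ => 0)), Series_0 by (auto; lia).
  destruct j; simpl; [ring|]. rewrite Hhead by lia. ring.
Qed.

Definition csummable (u : nat -> C) : Prop :=
  exists v : nat -> R, (forall n, Cmod (u n) <= v n) /\ ex_series v.

Lemma csummable_fst u : csummable u -> ex_series (fun n => fst (u n)).
Proof.
  intros [v [Hv Hs]]. apply (@ex_series_le R_AbsRing R_CompleteNormedModule _ v); auto. intros n.
  change (Rabs (fst (u n)) <= v n).
  pose proof (Rmax_Cmod (u n)). pose proof (Rmax_l (Rabs (fst (u n))) (Rabs (snd (u n)))).
  specialize (Hv n). lra.
Qed.

Lemma csummable_snd u : csummable u -> ex_series (fun n => snd (u n)).
Proof.
  intros [v [Hv Hs]]. apply (@ex_series_le R_AbsRing R_CompleteNormedModule _ v); auto. intros n.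
  change (Rabs (snd (u n)) <= v n).
  pose proof (Rmax_Cmod (u n)). pose proof (Rmax_r (Rabs (fst (u n))) (Rabs (snd (u n)))).
  specialize (Hv n). lra.
Qed.

Lemma csummable_scal c u : csummable u -> csummable (fun n => (c * u n)%C).
Proof.
  intros [bu [Hu Su]]. exists (fun n => bu n * Cmod c). split.
  - intros n. rewrite Cmod_mult, Rmult_comm. apply Rmult_le_compat_r; auto using Cmod_ge_0.
  - apply ex_series_scal_r; auto.
Qed.

Lemma csum_ext u v : (forall n, u n = v n) -> csum u = csum v.
Proof. intros E. unfold csum. f_equal; apply Series_ext; intros n; rewrite E; auto. Qed.

Lemma csum_plus u v : csummable u -> csummable v ->
  csum (fun n => (u n + v n)%C) = (csum u + csum v)%C.
Proof.
  intros Hu Hv. unfold csum. simpl. rewrite !Series_plus; auto using csummable_fst, csummable_snd.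
Qed.

Lemma csum_scal c u : csummable u -> csum (fun n => (c * u n)%C) = (c * csum u)%C.
Proof.
  intros Hu. unfold csum. simpl.
  pose proof (csummable_fst u Hu). pose proof (csummable_snd u Hu).
  rewrite Series_minus, Series_plus, !Series_scal_l
    by (apply (@ex_series_scal_l R_AbsRing R_NormedModule); auto).
  reflexivity.
Qed.

Lemma csum_minus u v : csummable u -> csummable v ->
  csum (fun n => (u n - v n)%C) = (csum u - csum v)%C.
Proof.
  intros Hu Hv.
  rewrite (csum_ext _ (fun n => (u n + (-1) * v n)%C)) by (intros; ring).
  rewrite csum_plus, csum_scal by auto using csummable_scal. ring.
Qed.

Lemma dot_le_sqrt x y c d : c ^ 2 + d ^ 2 = 1 -> x * c + y * d <= sqrt (x ^ 2 + y ^ 2).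
Proof.
  intros H. destruct (Rle_dec (x * c + y * d) 0); [pose proof (sqrt_pos (x ^ 2 + y ^ 2)); lra|].
  rewrite <- (sqrt_pow2 (x * c + y * d)) by lra. apply sqrt_le_1_alt.
  assert (E : (x ^ 2 + y ^ 2) * (c ^ 2 + d ^ 2) = (x * c + y * d) ^ 2 + (x * d - y * c) ^ 2) by ring.
  pose proof (pow2_ge_0 (x * d - y * c)). rewrite H in E. lra.
Qed.

(* Project onto the direction of [csum u]: [Cmod (A, B) = A c + B d] with [(c, d)] a unit vector. *)
Lemma Cmod_csum_le (u : nat -> C) (v : nat -> R) :
  (forall n, Cmod (u n) <= v n) -> ex_series v -> Cmod (csum u) <= Series v.
Proof.
  intros Hv Hs. assert (Hu : csummable u) by (exists v; auto).
  pose proof (csummable_fst u Hu) as H1. pose proof (csummable_snd u Hu) as H2.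
  unfold csum. set (A := Series (fun n => fst (u n))). set (B := Series (fun n => snd (u n))).
  assert (HAB : Cmod (A, B) ^ 2 = A ^ 2 + B ^ 2)
    by (unfold Cmod; cbn [fst snd]; rewrite pow2_sqrt; [ring | nra]).
  destruct (Req_dec (Cmod (A, B)) 0) as [E|E].
  { rewrite E, <- Series_0. apply Series_le_compat; auto using ex_series_0.
    intros n; eapply Rle_trans; [apply Cmod_ge_0 | apply Hv]. }
  set (c := A / Cmod (A, B)). set (d := B / Cmod (A, B)).
  assert (Hcd : c ^ 2 + d ^ 2 = 1) by (unfold c, d; field_simplify; [rewrite <- HAB; field|]; lra).
  assert (E' : Cmod (A, B) = A * c + B * d)
    by (unfold c, d; field_simplify; [rewrite <- HAB; field|]; lra).
  rewrite E'.
  unfold A, B. rewrite <- !Series_scal_r, <- Series_plus by (apply ex_series_scal_r; auto).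
  apply Series_le_compat; auto.
  - intros n. eapply Rle_trans; [|apply Hv]. apply dot_le_sqrt; auto.
  - apply (ex_series_plus (fun n => fst (u n) * c) (fun n => snd (u n) * d));
      apply ex_series_scal_r; auto.
Qed.

Lemma Cmod_le_sup_norm I h alpha (psi : R -> C) x :
  in_Calpha I h alpha psi -> in01 x -> Cmod (psi x) <= sup_norm psi.
Proof. intros [Hsup _] Hx. apply le_Lub_Rbar; auto. exists x; auto. Qed.

Lemma holder_loc_quotient_le I h alpha (psi : R -> C) j x z :
  in_Calpha I h alpha psi -> I j = true -> in01 x -> in01 z -> x <> z ->
  Cmod (psi (h j x) - psi (h j z))%C / Rpower (Rabs (x - z)) alpha <= holder_loc I h alpha psi.
Proof. intros [_ Hhol] Hj Hx Hz Hxz. apply le_Lub_Rbar; auto. exists j, x, z; auto. Qed.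

Lemma in_Calpha_normb_le I h alpha bb (phi : R -> C) M H :
  0 <= M -> 0 <= H -> (forall x, in01 x -> Cmod (phi x) <= M) ->
  (forall v, holder_loc_set I h alpha phi v -> v <= H) ->
  in_Calpha I h alpha phi /\ normb I h alpha bb phi <= Rmax M (H / (1 + rpow (Rabs bb) alpha)).
Proof.
  intros HM HH Hsup Hhol.
  assert (Hsup' : forall v, sup_set phi v -> v <= M) by (intros v (x & Hx & ->); auto).
  split; [split; [exists M | exists H]; auto|].
  pose proof (rpow_ge_0 (Rabs bb) alpha).
  apply Rmax_lub.
  - eapply Rle_trans; [apply Lub_Rbar_le; eauto | apply Rmax_l].
  - eapply Rle_trans; [|apply Rmax_r]. apply Rmult_le_compat_r; [left; apply Rinv_0_lt_compat; lra|].
    apply Lub_Rbar_le; auto.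
Qed.

(** * The normalised transfer operator *)

Section NormalisedTransferOperator.

Variables (alpha C0 rho eps0 : R) (I : nat -> bool) (a b : nat -> R)
  (F : R -> R) (h : nat -> R -> R) (r : R -> R)
  (lam : R -> R) (f : R -> R -> R) (eps1 : R).
Hypothesis HS : Setting alpha C0 rho eps0 I a b F h r.
Hypothesis HE : EigenFamily alpha eps0 I h r lam f eps1.

Ltac destruct_setting :=
  destruct HS as (Halpha & HC0 & Hrho & Heps0 & Hab & Hdisj & Hnull & HF & Hfull & Hbranch
                  & Hlog & Hrpos & Hr & Hrh & Hsum).
Ltac destruct_eigen := destruct HE as (Heps1 & Heps10 & Hlam0 & Hsigma & Hcont).

Lemma alpha_range : 0 < alpha <= 1. Proof. destruct_setting; auto. Qed.
Lemma C0_pos : 0 < C0. Proof. destruct_setting; auto. Qed.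
Lemma rho_range : 0 < rho < 1. Proof. destruct_setting; auto. Qed.
Lemma eps1_range : 0 < eps1 <= eps0. Proof. destruct_eigen; auto. Qed.
Lemma Rabs_0_lt_eps1 : Rabs 0 < eps1. Proof. rewrite Rabs_R0. apply eps1_range. Qed.
Lemma lam_0 : lam 0 = 1. Proof. destruct_eigen; auto. Qed.

Lemma rpow_dist_le_1 y y' : in01 y -> in01 y' -> rpow (Rabs (y - y')) alpha <= 1.
Proof. intros. apply rpow_dist_le_1_in01; auto. pose proof alpha_range; lra. Qed.

Lemma ab_range i : I i = true -> 0 <= a i < b i /\ b i <= 1.
Proof. destruct_setting. auto. Qed.

Lemma ab_disjoint i j : I i = true -> I j = true -> i <> j -> b i <= a j \/ b j <= a i.
Proof. destruct_setting. auto. Qed.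

Lemma h_in_interval j x : I j = true -> in01 x -> in01 (h j x) /\ a j < h j x < b j.
Proof.
  destruct_setting. intros Hj Hx. destruct (Hfull j Hj) as [Hh _].
  destruct (Hh x Hx) as [Hx' _]. destruct (Hab j Hj). unfold in01; repeat split; lra.
Qed.

Lemma h_in01 j x : I j = true -> in01 x -> in01 (h j x).
Proof. intros. apply h_in_interval; auto. Qed.

Lemma h_derive_pos j x : I j = true -> in01 x -> ex_derive (h j) x /\ 0 < Rabs (Derive (h j) x).
Proof.
  destruct_setting. intros Hj Hx. destruct (Hfull j Hj) as [Hh _].
  destruct (Hh x Hx) as (_ & _ & Hd & Hd0). split; auto. apply Rabs_pos_lt; auto.
Qed.

Lemma Rabs_Derive_h_le j x : I j = true -> in01 x -> Rabs (Derive (h j) x) <= C0 * rho.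
Proof.
  destruct_setting. intros Hj Hx.
  destruct (Hbranch 1%nat (j :: nil) (le_n 1) eq_refl) with x as [_ Hle]; auto.
  - intros i [<-|[]]; auto.
  - simpl in Hle. rewrite Rmult_1_r in Hle. exact Hle.
Qed.

Lemma h_lipschitz j x z : I j = true -> in01 x -> in01 z -> Rabs (h j x - h j z) <= C0 * Rabs (x - z).
Proof.
  intros Hj Hx Hz. eapply Rle_trans.
  - apply (MVT_Rabs_le_in01 (h j) (C0 * rho)); auto.
    intros t Ht; split; [apply h_derive_pos | apply Rabs_Derive_h_le]; auto.
  - pose proof rho_range; pose proof C0_pos.
    apply Rmult_le_compat_r; [apply Rabs_pos | nra].
Qed.

Lemma ln_Derive_h_holder j x y : I j = true -> in01 x -> in01 y ->
  Rabs (ln (Rabs (Derive (h j) x)) - ln (Rabs (Derive (h j) y))) <= C0 * rpow (Rabs (x - y)) alpha.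
Proof.
  destruct_setting. intros Hj Hx Hy. destruct (Req_dec x y) as [->|Hxy].
  - rewrite !Rminus_diag, Rabs_R0. pose proof (rpow_ge_0 0 alpha). nra.
  - apply le_mult_rpow_of_div_le; auto. apply Rabs_pos_lt; lra.
Qed.

Lemma r_h_lipschitz j x z : I j = true -> in01 x -> in01 z ->
  Rabs (r (h j x) - r (h j z)) <= C0 * Rabs (x - z).
Proof. destruct_setting. intros Hj Hx Hz. apply (MVT_Rabs_le_in01 (fun t => r (h j t))); auto. Qed.

Lemma Derive_h_ge j x : I j = true -> in01 x ->
  exp (- C0) * Rabs (Derive (h j) (1/2)) <= Rabs (Derive (h j) x).
Proof.
  intros Hj Hx. assert (Hhalf : in01 (1/2)) by (unfold in01; lra).
  pose proof (ln_Derive_h_holder j (1/2) x Hj Hhalf Hx) as Hln.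
  pose proof (rpow_dist_le_1 (1/2) x Hhalf Hx).
  pose proof C0_pos. pose proof (rpow_ge_0 (Rabs (1/2 - x)) alpha).
  pose proof (h_derive_pos j x Hj Hx) as [_ Hp]. pose proof (h_derive_pos j (1/2) Hj Hhalf) as [_ Hp2].
  rewrite <- (exp_ln (Rabs (Derive (h j) x))), <- (exp_ln (Rabs (Derive (h j) (1/2)))) at 1 by auto.
  rewrite <- exp_plus. apply exp_le_compat.
  pose proof (Rle_abs (ln (Rabs (Derive (h j) (1/2))) - ln (Rabs (Derive (h j) x)))). nra.
Qed.

Lemma exists_weight_majorant : exists beta : nat -> R, ex_series beta /\ (forall j, 0 <= beta j) /\
  forall j x sigma, I j = true -> in01 x -> Rabs sigma <= eps0 ->
    exp (- (sigma * r (h j x))) * Rabs (Derive (h j) x) <= beta j.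
Proof.
  destruct_setting. destruct Hsum as (Rb & Db & HRD & Hser).
  exists (fun i => if I i then exp (eps0 * Rb i) * Db i else 0). split; [exact Hser | split].
  - intros j. destruct (I j) eqn:Ej; [|lra].
    destruct (HRD j Ej (1/2)) as [_ HD]; [unfold in01; lra|].
    pose proof (Rabs_pos (Derive (h j) (1/2))). pose proof (exp_pos (eps0 * Rb j)). nra.
  - intros j x sigma Hj Hx Hs. rewrite Hj. destruct (HRD j Hj x Hx) as [HR HD].
    apply Rmult_le_compat; try (left; apply exp_pos); try apply Rabs_pos; auto.
    apply exp_le_compat.
    assert (Rabs (sigma * r (h j x)) <= eps0 * Rb j)
      by (rewrite Rabs_mult; apply Rmult_le_compat; auto using Rabs_pos).
    pose proof (Rle_abs (- (sigma * r (h j x)))). rewrite Rabs_Ropp in *. lra.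
Qed.

Lemma lam_bounds s : Rabs s < eps1 -> 0 < lam s /\ / 2 <= lam s <= 2.
Proof. destruct_eigen. intros Hs. destruct (Hsigma s Hs) as (H1 & _ & _ & _ & _ & H2 & _). auto. Qed.

Lemma f_pos s x : Rabs s < eps1 -> in01 x -> 0 < f s x.
Proof. destruct_eigen. intros Hs Hx. destruct (Hsigma s Hs) as (_ & H & _). auto. Qed.

Lemma f_comparable s x : Rabs s < eps1 -> in01 x -> f 0 x / 2 <= f s x <= 2 * f 0 x.
Proof.
  destruct_eigen. intros Hs Hx. destruct (Hsigma s Hs) as (_ & _ & _ & _ & _ & _ & H & _). auto.
Qed.

Lemma f_eigen s x : Rabs s < eps1 -> in01 x ->
  Pop I h r (RtoC s) (fun y => RtoC (f s y)) x = RtoC (lam s * f s x).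
Proof. destruct_eigen. intros Hs Hx. destruct (Hsigma s Hs) as (_ & _ & _ & H & _). auto. Qed.

Lemma f_holder_quotient_le s x z : Rabs s < eps1 -> in01 x -> in01 z -> x <> z ->
  Rabs (f s x - f s z) / Rpower (Rabs (x - z)) alpha <= holder_semi alpha (f s).
Proof.
  destruct_eigen. intros Hs Hx Hz Hxz. destruct (Hsigma s Hs) as (_ & _ & Hb & _).
  apply le_Lub_Rbar; auto. exists x, z; auto.
Qed.

Definition Kf_hol : R := 2 * holder_semi alpha (f 0).

Lemma Kf_hol_ge_0 : 0 <= Kf_hol.
Proof.
  unfold Kf_hol. enough (0 <= holder_semi alpha (f 0)) by lra.
  eapply Rle_trans;
    [|apply (f_holder_quotient_le 0 (1/3) (2/3)); auto using Rabs_0_lt_eps1; unfold in01; lra].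
  apply Rmult_le_pos; [apply Rabs_pos | left; apply Rinv_0_lt_compat, exp_pos].
Qed.

Lemma f_holder s x z : Rabs s < eps1 -> in01 x -> in01 z ->
  Rabs (f s x - f s z) <= Kf_hol * rpow (Rabs (x - z)) alpha.
Proof.
  intros Hs Hx Hz. destruct (Req_dec x z) as [->|Hxz].
  { rewrite !Rminus_diag, Rabs_R0. pose proof Kf_hol_ge_0. pose proof (rpow_ge_0 0 alpha). nra. }
  apply le_mult_rpow_of_div_le; [apply Rabs_pos_lt; lra|].
  eapply Rle_trans; [apply f_holder_quotient_le; auto|].
  destruct_eigen. destruct (Hsigma s Hs) as (_ & _ & _ & _ & _ & _ & _ & H). unfold Kf_hol. lra.
Qed.

Definition Kf_sup : R := 2 * (f 0 (1/2) + Kf_hol).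

Lemma f_le_Kf_sup s x : Rabs s < eps1 -> in01 x -> f s x <= Kf_sup.
Proof.
  intros Hs Hx. assert (Hhalf : in01 (1/2)) by (unfold in01; lra).
  pose proof (f_comparable s x Hs Hx).
  pose proof (f_holder 0 x (1/2) Rabs_0_lt_eps1 Hx Hhalf).
  pose proof (rpow_dist_le_1 x (1/2) Hx Hhalf).
  pose proof (rpow_ge_0 (Rabs (x - 1/2)) alpha). pose proof Kf_hol_ge_0.
  pose proof (Rle_abs (f 0 x - f 0 (1/2))). unfold Kf_sup. nra.
Qed.

Lemma Kf_sup_pos : 0 < Kf_sup.
Proof.
  pose proof (f_pos 0 (1/2) Rabs_0_lt_eps1 ltac:(unfold in01; lra)). pose proof Kf_hol_ge_0.
  unfold Kf_sup; lra.
Qed.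

Definition weight s y j : R :=
  if I j then exp (- (s * r (h j y))) * Rabs (Derive (h j) y) * f s (h j y) else 0.

Lemma weight_ge_0 s y j : Rabs s < eps1 -> in01 y -> 0 <= weight s y j.
Proof.
  intros Hs Hy. unfold weight. destruct (I j) eqn:Ej; [|lra].
  pose proof (f_pos s (h j y) Hs (h_in01 j y Ej Hy)). pose proof (exp_pos (- (s * r (h j y)))).
  pose proof (Rabs_pos (Derive (h j) y)). apply Rmult_le_pos; [apply Rmult_le_pos|]; lra.
Qed.

Lemma ex_series_weight s y : Rabs s < eps1 -> in01 y -> ex_series (weight s y).
Proof.
  intros Hs Hy. destruct exists_weight_majorant as (beta & Hbeta & Hbeta0 & Hbeta_le).
  apply (@ex_series_le R_AbsRing R_CompleteNormedModule _ (fun j => beta j * Kf_sup)).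
  - intros j. change (Rabs (weight s y j) <= beta j * Kf_sup).
    rewrite Rabs_pos_eq by (apply weight_ge_0; auto). unfold weight. destruct (I j) eqn:Ej.
    + pose proof (h_in01 j y Ej Hy).
      pose proof (f_pos s (h j y) Hs ltac:(auto)). pose proof (f_le_Kf_sup s (h j y) Hs ltac:(auto)).
      apply Rmult_le_compat; try lra.
      * apply Rmult_le_pos; [left; apply exp_pos | apply Rabs_pos].
      * apply Hbeta_le; auto. pose proof eps1_range; lra.
    + pose proof (Hbeta0 j); pose proof Kf_sup_pos; nra.
  - apply ex_series_scal_r, Hbeta.
Qed.

Lemma Series_weight s y : Rabs s < eps1 -> in01 y -> Series (weight s y) = lam s * f s y.
Proof.
  intros Hs Hy. pose proof (f_equal fst (f_eigen s y Hs Hy)) as E. simpl in E.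
  rewrite <- E. unfold Pop, csum. simpl. apply Series_ext. intros j. unfold weight.
  destruct (I j); simpl; [|reflexivity].
  unfold Cexp; simpl. replace (- (s * 0 + 0 * r (h j y))) with 0 by ring.
  replace (- (s * r (h j y) - 0 * 0)) with (- (s * r (h j y))) by ring.
  rewrite cos_0, sin_0. ring.
Qed.

Definition exp_sr (s : C) j y : C := Cexp (Copp (Cmult s (RtoC (r (h j y))))).

Lemma exp_sr_polar s j y : exp_sr s j y =
  (exp (- (fst s * r (h j y))) * cos (- (snd s * r (h j y))),
   exp (- (fst s * r (h j y))) * sin (- (snd s * r (h j y)))).
Proof.
  destruct s as [s1 s2]. unfold exp_sr, Cexp; simpl.
  replace (- (s1 * r (h j y) - s2 * 0)) with (- (s1 * r (h j y))) by ring.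
  replace (- (s1 * 0 + s2 * r (h j y))) with (- (s2 * r (h j y))) by ring. reflexivity.
Qed.

Lemma Cmod_exp_sr s j y : Cmod (exp_sr s j y) = exp (- (fst s * r (h j y))).
Proof. rewrite exp_sr_polar. apply Cmod_polar. left; apply exp_pos. Qed.

Definition cweight (s : C) j y : C :=
  (RtoC (/ (lam (fst s) * f (fst s) y)) * exp_sr s j y
   * RtoC (Rabs (Derive (h j) y) * f (fst s) (h j y)))%C.

Lemma Cmod_cweight s j y : Rabs (fst s) < eps1 -> in01 y -> I j = true ->
  Cmod (cweight s j y) = weight (fst s) y j / (lam (fst s) * f (fst s) y).
Proof.
  intros Hs Hy Hj. unfold cweight, weight. rewrite Hj, !Cmod_mult, !Cmod_R, Cmod_exp_sr.
  pose proof (lam_bounds _ Hs). pose proof (f_pos _ y Hs Hy).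
  pose proof (f_pos _ (h j y) Hs (h_in01 j y Hj Hy)).
  rewrite Rabs_pos_eq by (left; apply Rinv_0_lt_compat, Rmult_lt_0_compat; lra).
  rewrite (Rabs_pos_eq (_ * _)) by (apply Rmult_le_pos; [apply Rabs_pos | lra]).
  unfold Rdiv. ring.
Qed.

Lemma bound_ge_0 (phi : R -> C) M : (forall x, in01 x -> Cmod (phi x) <= M) -> 0 <= M.
Proof.
  intros H. pose proof (H (1/2) ltac:(unfold in01; lra)). pose proof (Cmod_ge_0 (phi (1/2))). lra.
Qed.

Lemma csummable_weighted s y (u : nat -> C) K : Rabs s < eps1 -> in01 y ->
  (forall j, Cmod (u j) <= weight s y j * K) -> csummable u.
Proof.
  intros Hs Hy H. exists (fun j => weight s y j * K).
  split; [exact H | apply ex_series_scal_r, ex_series_weight; auto].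
Qed.

Lemma Cmod_Lop_term_le s (phi : R -> C) M y j : Rabs (fst s) < eps1 -> in01 y ->
  (forall x, in01 x -> Cmod (phi x) <= M) ->
  Cmod (if I j then (cweight s j y * phi (h j y))%C else RtoC 0)
    <= weight (fst s) y j * (M / (lam (fst s) * f (fst s) y)).
Proof.
  intros Hs Hy HM. pose proof (lam_bounds _ Hs). pose proof (f_pos _ y Hs Hy).
  pose proof (bound_ge_0 phi M HM).
  assert (0 <= M / (lam (fst s) * f (fst s) y)) by (apply Rdiv_le_0_compat; nra).
  destruct (I j) eqn:Ej.
  - rewrite Cmod_mult, Cmod_cweight by auto.
    replace (weight (fst s) y j * (M / (lam (fst s) * f (fst s) y)))
      with (weight (fst s) y j / (lam (fst s) * f (fst s) y) * M) by (field; nra).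
    apply Rmult_le_compat_l; [apply Rdiv_le_0_compat; [apply weight_ge_0 | nra]; auto|].
    apply HM, h_in01; auto.
  - rewrite Cmod_R, Rabs_R0. apply Rmult_le_pos; auto. apply weight_ge_0; auto.
Qed.

Lemma csummable_Lop_terms s (phi : R -> C) M y : Rabs (fst s) < eps1 -> in01 y ->
  (forall x, in01 x -> Cmod (phi x) <= M) ->
  csummable (fun j => if I j then (cweight s j y * phi (h j y))%C else RtoC 0).
Proof. intros Hs Hy HM. eapply csummable_weighted; eauto. intros j. apply Cmod_Lop_term_le; auto. Qed.

Lemma Lop_csum s phi M y : Rabs (fst s) < eps1 -> in01 y -> (forall x, in01 x -> Cmod (phi x) <= M) ->
  Lop I h r lam f s phi y = csum (fun j => if I j then (cweight s j y * phi (h j y))%C else RtoC 0).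
Proof.
  intros Hs Hy HM. unfold Lop, Pop. rewrite <- csum_scal.
  - apply csum_ext. intros j. destruct (I j); unfold cweight, exp_sr, RtoC;
      apply injective_projections; simpl; ring.
  - apply (csummable_weighted (fst s) y _ M Hs Hy). intros j. unfold weight. destruct (I j) eqn:Ej.
    + rewrite !Cmod_mult, !Cmod_R. fold (exp_sr s j y). rewrite Cmod_exp_sr.
      pose proof (h_in01 j y Ej Hy). pose proof (f_pos _ (h j y) Hs ltac:(auto)).
      rewrite (Rabs_pos_eq (f _ _)), Rabs_Rabsolu by lra.
      pose proof (HM (h j y) ltac:(auto)). pose proof (exp_pos (- (fst s * r (h j y)))).
      pose proof (Rabs_pos (Derive (h j) y)).
      rewrite <- !Rmult_assoc. apply Rmult_le_compat_l; auto.
      repeat apply Rmult_le_pos; lra.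
    + rewrite Cmod_R, Rabs_R0. lra.
Qed.

(* Normalising by [lam * f] makes [Lop] Markov, which gives the contraction in sup norm. *)
Lemma Lop_sup_le s phi M y : Rabs (fst s) < eps1 -> in01 y -> (forall x, in01 x -> Cmod (phi x) <= M) ->
  Cmod (Lop I h r lam f s phi y) <= M.
Proof.
  intros Hs Hy HM. rewrite (Lop_csum s phi M y Hs Hy HM).
  pose proof (lam_bounds _ Hs). pose proof (f_pos _ y Hs Hy).
  eapply Rle_trans; [apply Cmod_csum_le; [intros j; apply (Cmod_Lop_term_le s phi M y j); auto|]|].
  - apply ex_series_scal_r, ex_series_weight; auto.
  - rewrite Series_scal_r, Series_weight by auto. right. field. split; lra.
Qed.

(** * A positive lower bound for [f 0] *)

Definition valid_word (w : list nat) : Prop := forall i, In i w -> I i = true.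

Lemma valid_word_cons i w : valid_word (i :: w) <-> I i = true /\ valid_word w.
Proof.
  split.
  - intros H. split; [apply H; left; auto | intros k Hk; apply H; right; auto].
  - intros [H1 H2] k [<-|Hk]; auto.
Qed.

Lemma valid_word_app u v : valid_word u -> valid_word v -> valid_word (u ++ v).
Proof. intros Hu Hv i Hi. apply in_app_or in Hi as [Hi|Hi]; auto. Qed.

Lemma branch_app u v x : branch h (u ++ v) x = branch h u (branch h v x).
Proof. induction u as [|i u IH]; simpl; auto. rewrite IH; auto. Qed.

Lemma branch_in01 w x : valid_word w -> in01 x -> in01 (branch h w x).
Proof.
  induction w as [|i w IH]; intros Hw Hx; simpl; auto.
  apply valid_word_cons in Hw as [Hi Hw]. apply h_in01; auto.
Qed.

Lemma branch_derive_le w x : valid_word w -> w <> nil -> in01 x ->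
  ex_derive (branch h w) x /\ Rabs (Derive (branch h w) x) <= C0 * rho ^ length w.
Proof.
  intros Hw Hne Hx. destruct_setting. apply (Hbranch (length w) w); auto.
  destruct w; [contradiction | simpl; lia].
Qed.

Lemma branch_ex_derive w x : valid_word w -> in01 x -> ex_derive (branch h w) x.
Proof.
  intros Hw Hx. destruct w as [|i w]; [apply (ex_derive_id x)|].
  apply branch_derive_le; auto. discriminate.
Qed.

Lemma Derive_branch_cons i w x : valid_word (i :: w) -> in01 x ->
  Derive (branch h (i :: w)) x = Derive (branch h w) x * Derive (h i) (branch h w x).
Proof.
  intros Hw Hx. apply valid_word_cons in Hw as [Hi Hw].
  apply (Derive_comp (h i) (branch h w)).
  - apply h_derive_pos, branch_in01; auto.
  - apply branch_ex_derive; auto.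
Qed.

Lemma branch_lipschitz w x z : valid_word w -> w <> nil -> in01 x -> in01 z ->
  Rabs (branch h w x - branch h w z) <= C0 * rho ^ length w * Rabs (x - z).
Proof.
  intros Hw Hne Hx Hz. apply MVT_Rabs_le_in01; auto. intros t Ht. apply branch_derive_le; auto.
Qed.

Lemma Derive_branch_ge w : valid_word w ->
  exists k, 0 < k /\ forall x, in01 x -> k <= Rabs (Derive (branch h w) x).
Proof.
  induction w as [|i w IH]; intros Hw.
  - exists 1. split; [lra|]. intros x _. simpl. rewrite Derive_id, Rabs_R1. lra.
  - pose proof Hw as Hiw. apply valid_word_cons in Hw as [Hi Hw].
    destruct (IH Hw) as [k [Hk Hkx]].
    pose proof (h_derive_pos i (1/2) Hi ltac:(unfold in01; lra)) as [_ Hp].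
    exists (k * (exp (- C0) * Rabs (Derive (h i) (1/2)))). split.
    + apply Rmult_lt_0_compat; auto. apply Rmult_lt_0_compat; auto. apply exp_pos.
    + intros x Hx. rewrite Derive_branch_cons, Rabs_mult by auto.
      apply Rmult_le_compat; auto; [lra | | apply Derive_h_ge, branch_in01; auto].
      apply Rmult_le_pos; [left; apply exp_pos | apply Rabs_pos].
Qed.

Lemma weight_0 x j : I j = true -> weight 0 x j = Rabs (Derive (h j) x) * f 0 (h j x).
Proof. intros Hj. unfold weight. rewrite Hj, Rmult_0_l, Ropp_0, exp_0. ring. Qed.

Lemma Series_weight_0 x : in01 x -> Series (weight 0 x) = f 0 x.
Proof. intros Hx. rewrite Series_weight, lam_0 by auto using Rabs_0_lt_eps1. ring. Qed.

Lemma f0_ge_branch j x : I j = true -> in01 x -> Rabs (Derive (h j) x) * f 0 (h j x) <= f 0 x.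
Proof.
  intros Hj Hx. rewrite <- weight_0, <- Series_weight_0 by auto.
  apply Series_ge_term; [intros; apply weight_ge_0 | apply ex_series_weight]; auto using Rabs_0_lt_eps1.
Qed.

Lemma f0_ge_word w x : valid_word w -> in01 x ->
  Rabs (Derive (branch h w) x) * f 0 (branch h w x) <= f 0 x.
Proof.
  induction w as [|i w IH]; intros Hw Hx.
  - simpl. rewrite Derive_id, Rabs_R1. lra.
  - rewrite Derive_branch_cons, Rabs_mult by auto. apply valid_word_cons in Hw as [Hi Hw].
    pose proof (f0_ge_branch i (branch h w x) Hi (branch_in01 w x Hw Hx)).
    pose proof (Rabs_pos (Derive (branch h w) x)). pose proof (IH Hw Hx).
    simpl. rewrite Rmult_assoc. eapply Rle_trans; [|eauto]. apply Rmult_le_compat_l; auto.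
Qed.

Lemma exists_branch : exists j, I j = true.
Proof.
  apply NNPP. intros Hnone. assert (Hhalf : in01 (1/2)) by (unfold in01; lra).
  pose proof (Series_weight_0 (1/2) Hhalf) as E.
  rewrite (Series_ext _ (fun _ => 0)), Series_0 in E.
  - pose proof (f_pos 0 (1/2) Rabs_0_lt_eps1 Hhalf). lra.
  - intros j. unfold weight. destruct (I j) eqn:Ej; auto. exfalso; eauto.
Qed.

Lemma valid_word_repeat j n : I j = true -> valid_word (repeat j n).
Proof. intros Hj i Hi. apply repeat_spec in Hi. subst; auto. Qed.

Lemma f0_eq_iterate_of_unique_branch j : I j = true -> (forall k, I k = true -> k = j) ->
  forall n x, in01 x -> f 0 x = Rabs (Derive (branch h (repeat j n)) x) * f 0 (branch h (repeat j n) x).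
Proof.
  intros Hj Hu.
  assert (Hstep : forall y, in01 y -> f 0 y = Rabs (Derive (h j) y) * f 0 (h j y)).
  { intros y Hy. rewrite <- weight_0, <- Series_weight_0 by auto. apply Series_single_term.
    intros k Hk. unfold weight. destruct (I k) eqn:Ek; auto. exfalso; apply Hk; auto. }
  induction n as [|n IH]; intros x Hx.
  - simpl. rewrite Derive_id, Rabs_R1. ring.
  - change (repeat j (S n)) with (j :: repeat j n).
    rewrite Derive_branch_cons, Rabs_mult by (auto; apply (valid_word_repeat j (S n) Hj)).
    simpl. rewrite Rmult_assoc, <- Hstep by (apply branch_in01; auto using valid_word_repeat).
    apply IH, Hx.
Qed.

(* With a single branch, [f 0 = |(h^n)'| f 0 o h^n <= C0 rho^n sup f], forcing [f 0 = 0]. *)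
Lemma exists_two_branches : exists j k, I j = true /\ I k = true /\ j <> k.
Proof.
  destruct exists_branch as [j Hj]. apply NNPP. intros Hnot.
  assert (Hu : forall k, I k = true -> k = j) by (intros k Hk; apply NNPP; intros Hne; eauto 6).
  assert (Hhalf : in01 (1/2)) by (unfold in01; lra).
  pose proof (f_pos 0 (1/2) Rabs_0_lt_eps1 Hhalf) as Hf0.
  pose proof Kf_sup_pos. pose proof C0_pos. pose proof rho_range.
  destruct (pow_lt_1_zero rho ltac:(rewrite Rabs_pos_eq; lra) (f 0 (1/2) / (C0 * Kf_sup)))
    as [N HN]; [apply Rdiv_lt_0_compat; nra|].
  specialize (HN (S N) ltac:(lia)). rewrite Rabs_pos_eq in HN by (apply pow_le; lra).
  set (w := repeat j (S N)). assert (Hw : valid_word w) by apply valid_word_repeat, Hj.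
  pose proof (branch_derive_le w (1/2) Hw ltac:(discriminate) Hhalf) as [_ Hd].
  replace (length w) with (S N) in Hd by (symmetry; apply repeat_length).
  pose proof (f_le_Kf_sup 0 _ Rabs_0_lt_eps1 (branch_in01 w (1/2) Hw Hhalf)).
  pose proof (f_pos 0 _ Rabs_0_lt_eps1 (branch_in01 w (1/2) Hw Hhalf)).
  pose proof (Rabs_pos (Derive (branch h w) (1/2))).
  assert (Hlt : rho ^ S N * (C0 * Kf_sup) < f 0 (1/2)).
  { apply (Rmult_lt_compat_r (C0 * Kf_sup)) in HN; [|nra].
    unfold Rdiv in HN. rewrite Rmult_assoc, Rinv_l, Rmult_1_r in HN by nra. exact HN. }
  rewrite (f0_eq_iterate_of_unique_branch j Hj Hu (S N) (1/2) Hhalf) in Hlt. fold w in Hlt.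
  assert (Rabs (Derive (branch h w) (1/2)) * f 0 (branch h w (1/2)) <= C0 * rho ^ S N * Kf_sup)
    by (apply Rmult_le_compat; lra).
  lra.
Qed.

Definition periodic_point (w : list nat) (p : R) : Prop :=
  valid_word w /\ w <> nil /\ in01 p /\ branch h w p = p.

Lemma periodic_point_of_ordered_branches j k : I j = true -> I k = true -> b j <= a k ->
  exists w p, periodic_point w p.
Proof.
  intros Hj Hk Hjk. pose proof (ab_range j Hj). pose proof (ab_range k Hk).
  pose proof (h_derive_pos j (1/2) Hj ltac:(unfold in01; lra)) as [_ Hd].
  destruct (exists_fixed_point_pair (h j) (h k) (exp (- C0) * Rabs (Derive (h j) (1/2))) (b j) (a k))
    as [p [Hp [Hfix|Hfix]]].
  - apply Rmult_lt_0_compat; [apply exp_pos | exact Hd].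
  - lra.
  - lra.
  - intros t Ht. pose proof (h_in_interval j t Hj Ht).
    split; [apply h_derive_pos | split; [apply Derive_h_ge | lra]]; auto.
  - intros t Ht. pose proof (h_in_interval k t Hk Ht).
    split; [apply h_derive_pos | lra]; auto.
  - exists (j :: nil), p. split; [intros i [<-|[]]; auto | split; [discriminate | auto]].
  - exists (j :: k :: nil), p.
    split; [intros i [<-|[<-|[]]]; auto | split; [discriminate | auto]].
Qed.

Lemma exists_periodic_point : exists w p, periodic_point w p.
Proof.
  destruct exists_two_branches as (j & k & Hj & Hk & Hjk).
  destruct (ab_disjoint j k Hj Hk Hjk);
    [apply (periodic_point_of_ordered_branches j k) | apply (periodic_point_of_ordered_branches k j)];
    auto.
Qed.

Fixpoint word_pow (w : list nat) (n : nat) : list nat :=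
  match n with O => nil | S m => w ++ word_pow w m end.

Lemma periodic_point_pow w p n : periodic_point w p -> periodic_point (word_pow w (S n)) p.
Proof.
  intros (Hw & Hne & Hp & Hfix). induction n as [|n (Hwn & _ & _ & Hfixn)].
  - simpl. rewrite app_nil_r. exact (conj Hw (conj Hne (conj Hp Hfix))).
  - split; [apply valid_word_app; auto|].
    split; [destruct w; [contradiction | discriminate]|].
    split; [exact Hp|].
    change (branch h (w ++ word_pow w (S n)) p = p). rewrite branch_app, Hfixn; auto.
Qed.

Lemma length_word_pow w n : length (word_pow w n) = (n * length w)%nat.
Proof. induction n; simpl; auto. rewrite length_app, IHn. lia. Qed.

Lemma periodic_word_shrinks w p d : periodic_point w p -> 0 < d ->
  exists W, valid_word W /\ forall x, in01 x -> Rabs (branch h W x - p) <= d.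
Proof.
  intros Hper Hd. pose proof C0_pos. pose proof rho_range.
  destruct (pow_lt_1_zero rho ltac:(rewrite Rabs_pos_eq; lra) (d / C0)) as [N HN];
    [apply Rdiv_lt_0_compat; lra|].
  destruct (periodic_point_pow w p N Hper) as (HW & HWne & Hp & Hfix).
  set (W := word_pow w (S N)) in *.
  assert (HWlen : (N <= length W)%nat).
  { unfold W. rewrite length_word_pow. destruct Hper as (_ & Hne & _).
    destruct w; [contradiction | simpl; nia]. }
  specialize (HN _ HWlen). rewrite Rabs_pos_eq in HN by (apply pow_le; lra).
  exists W. split; auto. intros x Hx. rewrite <- Hfix at 1.
  eapply Rle_trans; [apply branch_lipschitz; auto|].
  pose proof (in01_dist x p Hx Hp). pose proof (Rabs_pos (x - p)).
  assert (C0 * rho ^ length W <= d).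
  { apply (Rmult_lt_compat_l C0) in HN; auto. unfold Rdiv in HN.
    rewrite <- Rmult_assoc, (Rmult_comm C0 d), Rmult_assoc, Rinv_r, Rmult_1_r in HN; lra. }
  pose proof (pow_le rho (length W) ltac:(lra)). nra.
Qed.

Lemma f0_ge_near_point p : in01 p ->
  exists d, 0 < d /\ forall y, in01 y -> Rabs (y - p) <= d -> f 0 p / 2 <= f 0 y.
Proof.
  intros Hp. pose proof (f_pos 0 p Rabs_0_lt_eps1 Hp). pose proof Kf_hol_ge_0.
  destruct (rpow_small_near_0 (f 0 p / (2 * (Kf_hol + 1))) alpha) as [d [Hd Hdr]];
    [apply alpha_range | apply Rdiv_lt_0_compat; lra|].
  exists d. split; auto. intros y Hy Hyp.
  pose proof (f_holder 0 y p Rabs_0_lt_eps1 Hy Hp) as Hhol.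
  pose proof (Hdr _ (conj (Rabs_pos _) Hyp)) as Hsmall.
  apply (Rmult_le_compat_l Kf_hol) in Hsmall; [|lra].
  assert (Kf_hol * (f 0 p / (2 * (Kf_hol + 1))) <= f 0 p / 2).
  { apply (Rmult_le_reg_r (2 * (Kf_hol + 1))); [lra|].
    replace (Kf_hol * (f 0 p / (2 * (Kf_hol + 1))) * (2 * (Kf_hol + 1))) with (Kf_hol * f 0 p)
      by (field; lra).
    nra. }
  pose proof (Rle_abs (f 0 p - f 0 y)). rewrite Rabs_minus_sym in Hhol. lra.
Qed.

Lemma f0_lower_bound : exists m0, 0 < m0 /\ forall x, in01 x -> m0 <= f 0 x.
Proof.
  destruct exists_periodic_point as (w & p & Hper).
  pose proof Hper as (_ & _ & Hp & _).
  destruct (f0_ge_near_point p Hp) as (d & Hd & Hnear).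
  destruct (periodic_word_shrinks w p d Hper Hd) as (W & HW & Hshrink).
  destruct (Derive_branch_ge W HW) as [k [Hk Hkx]].
  pose proof (f_pos 0 p Rabs_0_lt_eps1 Hp).
  exists (k * (f 0 p / 2)). split; [apply Rmult_lt_0_compat; lra|].
  intros x Hx. eapply Rle_trans; [|apply (f0_ge_word W x HW Hx)].
  apply Rmult_le_compat; [lra | lra | apply Hkx, Hx |].
  apply Hnear; [apply branch_in01 | apply Hshrink]; auto.
Qed.

(** * Distortion estimates and the adapted metric *)

Definition C0a : R := rpow C0 alpha.

Lemma C0a_ge_0 : 0 <= C0a. Proof. apply rpow_ge_0. Qed.

Lemma exp_r_h_var sg j y y' : Rabs sg <= 1 -> I j = true -> in01 y -> in01 y' ->
  Rabs (exp (- (sg * r (h j y))) - exp (- (sg * r (h j y'))))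
    <= exp (- (sg * r (h j y))) * (C0 * rpow (Rabs (y - y')) alpha * exp C0) /\
  exp (- (sg * r (h j y'))) <= exp (- (sg * r (h j y))) * exp C0.
Proof.
  intros Hs Hj Hy Hy'. pose proof C0_pos. pose proof (rpow_dist_le_1 y y' Hy Hy').
  pose proof (dist_le_rpow_in01 y y' alpha alpha_range Hy Hy').
  pose proof (r_h_lipschitz j y y' Hj Hy Hy'). pose proof (Rabs_pos (r (h j y) - r (h j y'))).
  apply Rabs_sub_le_of_ln_sub; try apply exp_pos; [|nra].
  rewrite !ln_exp. replace (- (sg * r (h j y')) - - (sg * r (h j y)))
    with (sg * (r (h j y) - r (h j y'))) by ring.
  rewrite Rabs_mult. pose proof (Rabs_pos sg). nra.
Qed.

Lemma Derive_h_var j y y' : I j = true -> in01 y -> in01 y' ->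
  Rabs (Rabs (Derive (h j) y) - Rabs (Derive (h j) y'))
    <= Rabs (Derive (h j) y) * (C0 * rpow (Rabs (y - y')) alpha * exp C0).
Proof.
  intros Hj Hy Hy'. pose proof C0_pos. pose proof (rpow_dist_le_1 y y' Hy Hy').
  apply Rabs_sub_le_of_ln_sub; try apply h_derive_pos; auto; [|nra].
  rewrite Rabs_minus_sym. apply ln_Derive_h_holder; auto.
Qed.

Lemma Cmod_exp_sr_sub_le s j y y' : Rabs (fst s) <= 1 -> I j = true -> in01 y -> in01 y' ->
  Cmod (exp_sr s j y - exp_sr s j y')%C <= exp (- (fst s * r (h j y)))
    * ((4 * C0a * rpow (Rabs (snd s)) alpha + 2 * C0 * exp C0) * rpow (Rabs (y - y')) alpha).
Proof.
  destruct s as [sg bb]. simpl fst; simpl snd. intros Hs Hj Hy Hy'.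
  set (E := exp (- (sg * r (h j y)))). set (E' := exp (- (sg * r (h j y')))).
  set (th := - (bb * r (h j y))). set (th' := - (bb * r (h j y'))).
  set (t := rpow (Rabs (y - y')) alpha). set (rb := rpow (Rabs bb) alpha).
  destruct (exp_r_h_var sg j y y' Hs Hj Hy Hy') as [HEE _]. fold E E' t in HEE.
  assert (Hth : Rabs (th - th') <= Rabs bb * (C0 * Rabs (y - y'))).
  { unfold th, th'. replace (- (bb * r (h j y)) - - (bb * r (h j y')))
      with (- (bb * (r (h j y) - r (h j y')))) by ring.
    rewrite Rabs_Ropp, Rabs_mult.
    apply Rmult_le_compat_l; [apply Rabs_pos | apply r_h_lipschitz; auto]. }
  assert (HX : rpow (Rabs bb * (C0 * Rabs (y - y'))) alpha = rb * (C0a * t)).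
  { pose proof C0_pos. rewrite !rpow_mult_distr; auto using Rabs_pos; [lra|].
    apply Rmult_le_pos; [lra | apply Rabs_pos]. }
  assert (HE0 : 0 <= E) by (left; apply exp_pos).
  pose proof (Rabs_scaled_sub_le cos E E' th th' _ alpha Rabs_cos_sub_le
    (fun u => Rabs_le _ _ (COS_bound u)) alpha_range HE0 Hth) as Hcos.
  pose proof (Rabs_scaled_sub_le sin E E' th th' _ alpha Rabs_sin_sub_le
    (fun u => Rabs_le _ _ (SIN_bound u)) alpha_range HE0 Hth) as Hsin.
  rewrite HX in Hcos, Hsin.
  rewrite !exp_sr_polar. simpl fst; simpl snd. fold E E' th th'.
  eapply Rle_trans; [apply Cmod_le_Rabs_sum|]. simpl fst; simpl snd.
  replace (E * ((4 * C0a * rb + 2 * C0 * exp C0) * t))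
    with (2 * (E * (2 * (rb * (C0a * t)))) + 2 * (E * (C0 * t * exp C0))) by ring.
  unfold Rminus in Hcos, Hsin, HEE. lra.
Qed.

Lemma f_h_var sg j y y' : Rabs sg < eps1 -> I j = true -> in01 y -> in01 y' ->
  Rabs (f sg (h j y) - f sg (h j y')) <= Kf_hol * (C0a * rpow (Rabs (y - y')) alpha).
Proof.
  intros Hs Hj Hy Hy'. pose proof C0_pos. pose proof Kf_hol_ge_0. pose proof alpha_range.
  eapply Rle_trans; [apply f_holder; auto; apply h_in01; auto|].
  apply Rmult_le_compat_l; auto.
  unfold C0a. rewrite <- rpow_mult_distr by (try apply Rabs_pos; lra).
  apply rpow_le_compat; [lra|]. split; [apply Rabs_pos | apply h_lipschitz; auto].
Qed.

Definition adapted_dist_set x z : R -> Prop :=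
  fun v => exists w, valid_word w /\ v = Rabs (branch h w x - branch h w z) / rho ^ length w.

Definition adapted_dist x z : R := real (Lub_Rbar (adapted_dist_set x z)).

Definition Cd : R := Rmax 1 C0.

Lemma Cd_ge_1 : 1 <= Cd. Proof. apply Rmax_l. Qed.

Lemma adapted_dist_set_le x z v : in01 x -> in01 z -> adapted_dist_set x z v -> v <= Cd * Rabs (x - z).
Proof.
  intros Hx Hz [w [Hw ->]]. pose proof rho_range. pose proof (Rabs_pos (x - z)).
  pose proof Cd_ge_1. pose proof (Rmax_r 1 C0 : C0 <= Cd).
  destruct w as [|i w].
  - simpl. unfold Rdiv. rewrite Rinv_1, Rmult_1_r. nra.
  - pose proof (branch_lipschitz (i :: w) x z Hw ltac:(discriminate) Hx Hz) as Hlip.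
    set (q := rho ^ length (i :: w)) in *. assert (Hq : 0 < q) by (apply pow_lt; lra).
    apply (Rmult_le_reg_r q); auto. unfold Rdiv.
    rewrite Rmult_assoc, Rinv_l, Rmult_1_r by lra.
    assert (0 <= (Cd - C0) * (q * Rabs (x - z))) by (apply Rmult_le_pos; nra). nra.
Qed.

Lemma bounded_adapted_dist_set x z : in01 x -> in01 z -> bounded_set (adapted_dist_set x z).
Proof. intros Hx Hz. exists (Cd * Rabs (x - z)). intros v. apply adapted_dist_set_le; auto. Qed.

Lemma adapted_dist_ge x z : in01 x -> in01 z -> Rabs (x - z) <= adapted_dist x z.
Proof.
  intros Hx Hz. apply le_Lub_Rbar; [apply bounded_adapted_dist_set; auto|].
  exists nil. split; [intros i []|]. simpl. unfold Rdiv. rewrite Rinv_1, Rmult_1_r. reflexivity.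
Qed.

Lemma adapted_dist_ge_0 x z : in01 x -> in01 z -> 0 <= adapted_dist x z.
Proof. intros Hx Hz. pose proof (adapted_dist_ge x z Hx Hz). pose proof (Rabs_pos (x - z)). lra. Qed.

Lemma adapted_dist_le x z : in01 x -> in01 z -> adapted_dist x z <= Cd * Rabs (x - z).
Proof.
  intros Hx Hz. apply Lub_Rbar_le; [intros v; apply adapted_dist_set_le; auto|].
  pose proof Cd_ge_1. pose proof (Rabs_pos (x - z)). nra.
Qed.

Lemma adapted_dist_contract i x z : I i = true -> in01 x -> in01 z ->
  adapted_dist (h i x) (h i z) <= rho * adapted_dist x z.
Proof.
  intros Hi Hx Hz. pose proof rho_range.
  apply Lub_Rbar_le; [|apply Rmult_le_pos; [lra | apply adapted_dist_ge_0; auto]].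
  intros v [w [Hw ->]].
  assert (Hwi : valid_word (w ++ i :: nil)) by (apply valid_word_app; auto; intros k [<-|[]]; auto).
  assert (Hle : Rabs (branch h (w ++ i :: nil) x - branch h (w ++ i :: nil) z)
                  / rho ^ length (w ++ i :: nil) <= adapted_dist x z).
  { apply le_Lub_Rbar; [apply bounded_adapted_dist_set; auto | exists (w ++ i :: nil); auto]. }
  rewrite !branch_app, length_app, Nat.add_comm in Hle. simpl in Hle.
  assert (Hp : 0 < rho ^ length w) by (apply pow_lt; lra).
  replace (Rabs (h i x - h i z) / 1) with (Rabs (h i x - h i z)) in Hle by field.
  replace (Rabs (branch h w (h i x) - branch h w (h i z)) / rho ^ length w) with
    (rho * (Rabs (branch h w (h i x) - branch h w (h i z)) / (rho * rho ^ length w))) by (field; lra).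
  apply Rmult_le_compat_l; lra.
Qed.

Definition rhoa : R := rpow rho alpha.

Lemma rhoa_range : 0 < rhoa < 1.
Proof.
  pose proof rho_range. pose proof alpha_range. unfold rhoa. rewrite rpow_exp_ln by lra.
  split; [apply exp_pos|]. rewrite <- exp_0. apply exp_increasing.
  assert (ln rho < 0) by (rewrite <- ln_1; apply ln_increasing; lra). nra.
Qed.

Lemma rpow_adapted_dist_contract j x z : I j = true -> in01 x -> in01 z ->
  rpow (adapted_dist (h j x) (h j z)) alpha <= rhoa * rpow (adapted_dist x z) alpha.
Proof.
  intros Hj Hx Hz. pose proof rho_range. pose proof alpha_range. unfold rhoa.
  rewrite <- rpow_mult_distr by (try apply adapted_dist_ge_0; auto; lra).
  apply rpow_le_compat; [lra|]. split; [apply adapted_dist_ge_0; apply h_in01; auto|].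
  apply adapted_dist_contract; auto.
Qed.

Lemma rpow_dist_le_adapted x z : in01 x -> in01 z ->
  rpow (Rabs (x - z)) alpha <= rpow (adapted_dist x z) alpha.
Proof.
  intros Hx Hz. apply rpow_le_compat; [pose proof alpha_range; lra|].
  split; [apply Rabs_pos | apply adapted_dist_ge; auto].
Qed.

Lemma rpow_adapted_dist_le x z : in01 x -> in01 z ->
  rpow (adapted_dist x z) alpha <= rpow Cd alpha * rpow (Rabs (x - z)) alpha.
Proof.
  intros Hx Hz. pose proof alpha_range. pose proof Cd_ge_1.
  rewrite <- rpow_mult_distr by (try apply Rabs_pos; lra).
  apply rpow_le_compat; [lra|]. split; [apply adapted_dist_ge_0 | apply adapted_dist_le]; auto.
Qed.

Lemma holder_loc_adapted (psi : R -> C) j x z :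
  in_Calpha I h alpha psi -> I j = true -> in01 x -> in01 z ->
  Cmod (psi (h j x) - psi (h j z))%C
    <= Rmax 0 (holder_loc I h alpha psi) * rpow (adapted_dist x z) alpha.
Proof.
  intros Hpsi Hj Hx Hz. pose proof (Rmax_l 0 (holder_loc I h alpha psi)).
  destruct (Req_dec x z) as [->|Hxz].
  { replace (psi (h j z) - psi (h j z))%C with (RtoC 0) by ring. rewrite Cmod_R, Rabs_R0.
    apply Rmult_le_pos; [lra | apply rpow_ge_0]. }
  apply Rle_trans with (Rmax 0 (holder_loc I h alpha psi) * rpow (Rabs (x - z)) alpha).
  - apply le_mult_rpow_of_div_le; [apply Rabs_pos_lt; lra|].
    eapply Rle_trans; [apply holder_loc_quotient_le; eauto | apply Rmax_r].
  - apply Rmult_le_compat_l; [lra | apply rpow_dist_le_adapted; auto].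
Qed.

(** * The Lasota-Yorke inequality *)

Section GivenLowerBound.

Variable m0 : R.
Hypothesis m0_pos : 0 < m0.
Hypothesis f0_ge_m0 : forall x, in01 x -> m0 <= f 0 x.

Definition Kf_inf : R := m0 / 2.

Lemma Kf_inf_pos : 0 < Kf_inf. Proof. unfold Kf_inf; lra. Qed.

Lemma f_ge_Kf_inf s x : Rabs s < eps1 -> in01 x -> Kf_inf <= f s x.
Proof.
  intros Hs Hx. pose proof (f_comparable s x Hs Hx). pose proof (f0_ge_m0 x Hx). unfold Kf_inf; lra.
Qed.

Lemma Rabs_Df_h_sub_le sg j y y' : Rabs sg < eps1 -> I j = true -> in01 y -> in01 y' ->
  Rabs (Rabs (Derive (h j) y) * f sg (h j y) - Rabs (Derive (h j) y') * f sg (h j y'))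
    <= Rabs (Derive (h j) y) * f sg (h j y) * (C0 * rpow (Rabs (y - y')) alpha * exp C0)
       + Rabs (Derive (h j) y') * f sg (h j y') * (Kf_hol * C0a * rpow (Rabs (y - y')) alpha / Kf_inf).
Proof.
  intros Hs Hj Hy Hy'.
  set (D := Rabs (Derive (h j) y)). set (D' := Rabs (Derive (h j) y')).
  set (g := f sg (h j y)). set (g' := f sg (h j y')). set (t := rpow (Rabs (y - y')) alpha).
  pose proof (Derive_h_var j y y' Hj Hy Hy') as HD. pose proof (f_h_var sg j y y' Hs Hj Hy Hy') as Hg.
  fold D D' g g' t in HD, Hg.
  assert (Hg0 : Kf_inf <= g) by (apply f_ge_Kf_inf, h_in01; auto).
  assert (Hg0' : Kf_inf <= g') by (apply f_ge_Kf_inf, h_in01; auto).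
  assert (HD' : 0 <= D') by apply Rabs_pos. pose proof Kf_inf_pos.
  assert (Hrel : Kf_hol * (C0a * t) <= g' * (Kf_hol * C0a * t / Kf_inf)).
  { pose proof Kf_hol_ge_0. pose proof C0a_ge_0.
    assert (Ht : 0 <= t) by apply rpow_ge_0.
    assert (0 <= Kf_hol * C0a * t) by (apply Rmult_le_pos; [apply Rmult_le_pos|]; auto).
    replace (g' * (Kf_hol * C0a * t / Kf_inf)) with (Kf_hol * C0a * t * (g' / Kf_inf)) by (field; lra).
    rewrite <- Rmult_assoc. rewrite <- (Rmult_1_r (Kf_hol * C0a * t)) at 1.
    apply Rmult_le_compat_l; auto. apply (Rmult_le_reg_r Kf_inf); auto. unfold Rdiv.
    rewrite Rmult_assoc, Rinv_l; lra. }
  replace (D * g - D' * g') with ((D - D') * g + D' * (g - g')) by ring.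
  eapply Rle_trans; [apply Rabs_triang|]. rewrite !Rabs_mult, (Rabs_pos_eq g), (Rabs_pos_eq D') by lra.
  apply Rplus_le_compat.
  - rewrite Rmult_comm, (Rmult_comm D g), Rmult_assoc. apply Rmult_le_compat_l; lra.
  - rewrite Rmult_assoc. apply Rmult_le_compat_l; lra.
Qed.

Definition Kvar_exp (rb : R) : R := 4 * C0a * rb + 2 * C0 * exp C0 + C0 * exp C0 * exp C0.
Definition Kvar_f : R := Kf_hol * (C0a + 1) / Kf_inf.

Lemma inv_normaliser_var sg y y' : Rabs sg < eps1 -> in01 y -> in01 y' ->
  Rabs (/ (lam sg * f sg y) - / (lam sg * f sg y'))
    <= / (lam sg * f sg y) * (Kf_hol * rpow (Rabs (y - y')) alpha / Kf_inf).
Proof.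
  intros Hs Hy Hy'. pose proof (lam_bounds sg Hs). pose proof Kf_inf_pos.
  pose proof (f_pos sg y Hs Hy). pose proof (f_ge_Kf_inf sg y' Hs Hy').
  replace (/ (lam sg * f sg y) - / (lam sg * f sg y'))
    with (/ (lam sg * f sg y) * ((f sg y' - f sg y) / f sg y')) by (field; lra).
  rewrite Rabs_mult, (Rabs_pos_eq (/ _)) by (left; apply Rinv_0_lt_compat; nra).
  apply Rmult_le_compat_l; [left; apply Rinv_0_lt_compat; nra|].
  unfold Rdiv. rewrite Rabs_mult, Rabs_inv, (Rabs_pos_eq (f sg y')) by lra.
  apply Rmult_le_compat; [apply Rabs_pos | left; apply Rinv_0_lt_compat; lra | |].
  - rewrite Rabs_minus_sym. apply f_holder; auto.
  - apply Rinv_le_contravar; lra.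
Qed.

Lemma exp_Df_h_var sg j y y' : Rabs sg < eps1 -> Rabs sg <= 1 -> I j = true -> in01 y -> in01 y' ->
  exp (- (sg * r (h j y')))
    * Rabs (Rabs (Derive (h j) y) * f sg (h j y) - Rabs (Derive (h j) y') * f sg (h j y'))
  <= rpow (Rabs (y - y')) alpha
     * (weight sg y j * (C0 * exp C0 * exp C0) + weight sg y' j * (Kf_hol * C0a / Kf_inf)).
Proof.
  intros Hs Hs1 Hj Hy Hy'. unfold weight. rewrite Hj.
  set (E := exp (- (sg * r (h j y)))). set (E' := exp (- (sg * r (h j y')))).
  set (Dg := Rabs (Derive (h j) y) * f sg (h j y)). set (Dg' := Rabs (Derive (h j) y') * f sg (h j y')).
  set (t := rpow (Rabs (y - y')) alpha).
  destruct (exp_r_h_var sg j y y' Hs1 Hj Hy Hy') as [_ HEE']. fold E E' in HEE'.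
  pose proof (Rabs_Df_h_sub_le sg j y y' Hs Hj Hy Hy') as HDD. fold Dg Dg' t in HDD.
  assert (HDg : 0 <= Dg) by (apply Rmult_le_pos; [apply Rabs_pos | left; apply f_pos, h_in01; auto]).
  assert (Ht : 0 <= t) by apply rpow_ge_0. pose proof C0_pos. pose proof (exp_pos C0).
  pose proof Kf_inf_pos. assert (HE' : 0 < E') by apply exp_pos.
  apply Rle_trans with (E' * (Dg * (C0 * t * exp C0) + Dg' * (Kf_hol * C0a * t / Kf_inf))).
  { apply Rmult_le_compat_l; [lra | exact HDD]. }
  assert (E' * Dg * (C0 * t * exp C0) <= E * exp C0 * Dg * (C0 * t * exp C0)).
  { apply Rmult_le_compat_r; [apply Rmult_le_pos; [apply Rmult_le_pos|]; lra|].
    apply Rmult_le_compat_r; lra. }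
  replace (E' * (Dg * (C0 * t * exp C0) + Dg' * (Kf_hol * C0a * t / Kf_inf)))
    with (E' * Dg * (C0 * t * exp C0) + t * (E' * Dg' * (Kf_hol * C0a / Kf_inf))) by (field; lra).
  replace (t * (E * Rabs (Derive (h j) y) * f sg (h j y) * (C0 * exp C0 * exp C0)
                + E' * Rabs (Derive (h j) y') * f sg (h j y') * (Kf_hol * C0a / Kf_inf)))
    with (E * exp C0 * Dg * (C0 * t * exp C0) + t * (E' * Dg' * (Kf_hol * C0a / Kf_inf)))
    by (unfold Dg, Dg'; ring).
  lra.
Qed.

Lemma cweight_var s j y y' :
  Rabs (fst s) < eps1 -> Rabs (fst s) <= 1 -> I j = true -> in01 y -> in01 y' ->
  Cmod (cweight s j y - cweight s j y')%C <=
    / (lam (fst s) * f (fst s) y) * rpow (Rabs (y - y')) alpha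
    * (weight (fst s) y j * Kvar_exp (rpow (Rabs (snd s)) alpha) + weight (fst s) y' j * Kvar_f).
Proof.
  intros Hs Hs1 Hj Hy Hy'. set (sg := fst s) in *.
  set (t := rpow (Rabs (y - y')) alpha). set (rb := rpow (Rabs (snd s)) alpha).
  set (Dg := Rabs (Derive (h j) y) * f sg (h j y)). set (Dg' := Rabs (Derive (h j) y') * f sg (h j y')).
  set (c := / (lam sg * f sg y)). set (c' := / (lam sg * f sg y')).
  pose proof (lam_bounds sg Hs). pose proof (f_pos sg y Hs Hy).
  assert (Hc : 0 < c) by (apply Rinv_0_lt_compat; nra).
  assert (HDg : 0 <= Dg) by (apply Rmult_le_pos; [apply Rabs_pos | left; apply f_pos, h_in01; auto]).
  assert (HDg' : 0 <= Dg') by (apply Rmult_le_pos; [apply Rabs_pos | left; apply f_pos, h_in01; auto]).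
  (* the three terms vary [exp_sr], [|h'| f o h] and the normalisation [c] respectively *)
  replace (cweight s j y - cweight s j y')%C with
    (RtoC c * (exp_sr s j y - exp_sr s j y') * RtoC Dg
     + RtoC c * exp_sr s j y' * (RtoC Dg - RtoC Dg')
     + (RtoC c - RtoC c') * exp_sr s j y' * RtoC Dg')%C by (unfold cweight; fold sg c c' Dg Dg'; ring).
  eapply Rle_trans; [apply Cmod_triangle|]. eapply Rle_trans; [apply Rplus_le_compat_r, Cmod_triangle|].
  rewrite !Cmod_mult, <- !RtoC_minus, !Cmod_R, Cmod_exp_sr, (Rabs_pos_eq c), (Rabs_pos_eq Dg),
    (Rabs_pos_eq Dg') by lra. fold sg.
  pose proof (Cmod_exp_sr_sub_le s j y y' Hs1 Hj Hy Hy') as T1.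
  pose proof (exp_Df_h_var sg j y y' Hs Hs1 Hj Hy Hy') as T2.
  pose proof (inv_normaliser_var sg y y' Hs Hy Hy') as T3.
  fold sg t rb Dg Dg' c c' in T1, T2, T3.
  apply (Rmult_le_compat_l c) in T2; [|lra].
  apply (Rmult_le_compat_r (exp (- (sg * r (h j y'))) * Dg')) in T3;
    [|apply Rmult_le_pos; [left; apply exp_pos | auto]].
  set (K1 := (4 * C0a * rb + 2 * C0 * exp C0) * t) in T1.
  apply Rle_trans with (c * (exp (- (sg * r (h j y))) * K1 * Dg)
    + c * (t * (weight sg y j * (C0 * exp C0 * exp C0) + weight sg y' j * (Kf_hol * C0a / Kf_inf)))
    + c * (Kf_hol * t / Kf_inf) * (exp (- (sg * r (h j y'))) * Dg')).
  - apply Rplus_le_compat; [apply Rplus_le_compat|]; rewrite Rmult_assoc; auto.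
    apply Rmult_le_compat_l; [lra | apply Rmult_le_compat_r; auto].
  - right. unfold weight, K1, Kvar_exp, Kvar_f, Dg, Dg'. rewrite Hj. pose proof Kf_inf_pos.
    field. lra.
Qed.

Lemma Kvar_f_ge_0 : 0 <= Kvar_f.
Proof.
  pose proof Kf_hol_ge_0. pose proof C0a_ge_0. pose proof Kf_inf_pos.
  unfold Kvar_f. apply Rdiv_le_0_compat; [apply Rmult_le_pos|]; lra.
Qed.

Lemma Kvar_exp_le rb : 0 <= rb -> Kvar_exp rb <= Kvar_exp 1 * (1 + rb).
Proof.
  intros Hrb. pose proof C0a_ge_0. pose proof C0_pos. pose proof (exp_pos C0).
  assert (0 <= C0 * exp C0) by nra. assert (0 <= C0 * exp C0 * exp C0) by nra.
  unfold Kvar_exp. nra.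
Qed.

Definition Bc : R := Kvar_exp 1 + Kf_sup * Kvar_f / Kf_inf.

Lemma Bc_ge_0 : 0 <= Bc.
Proof.
  pose proof Kvar_f_ge_0. pose proof Kf_sup_pos. pose proof Kf_inf_pos.
  assert (0 <= Kvar_exp 1).
  { pose proof C0a_ge_0. pose proof C0_pos. pose proof (exp_pos C0). unfold Kvar_exp. nra. }
  unfold Bc. assert (0 <= Kf_sup * Kvar_f / Kf_inf) by (apply Rdiv_le_0_compat; nra). lra.
Qed.

Lemma Kvar_le_Bc rb q : 0 <= rb -> 0 <= q <= Kf_sup / Kf_inf ->
  Kvar_exp rb + q * Kvar_f <= Bc * (1 + rb).
Proof.
  intros Hrb Hq. pose proof Kvar_f_ge_0. pose proof (Kvar_exp_le rb Hrb). pose proof Kf_inf_pos.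
  assert (Hqf : q * Kvar_f <= Kf_sup * Kvar_f / Kf_inf).
  { replace (Kf_sup * Kvar_f / Kf_inf) with (Kf_sup / Kf_inf * Kvar_f) by (field; lra).
    apply Rmult_le_compat_r; lra. }
  assert (0 <= q * Kvar_f * rb) by (apply Rmult_le_pos; [apply Rmult_le_pos|]; lra).
  unfold Bc. nra.
Qed.

Lemma Lop_term_var s (phi : R -> C) M A y y' j :
  Rabs (fst s) < eps1 -> Rabs (fst s) <= 1 -> in01 y -> in01 y' ->
  (forall x, in01 x -> Cmod (phi x) <= M) ->
  (forall j, I j = true -> Cmod (phi (h j y) - phi (h j y'))%C <= A) ->
  Cmod ((if I j then (cweight s j y * phi (h j y))%C else RtoC 0)
        - (if I j then (cweight s j y' * phi (h j y'))%C else RtoC 0))%C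
  <= / (lam (fst s) * f (fst s) y) * (weight (fst s) y j * A + rpow (Rabs (y - y')) alpha * M
       * (weight (fst s) y j * Kvar_exp (rpow (Rabs (snd s)) alpha) + weight (fst s) y' j * Kvar_f)).
Proof.
  intros Hs Hs1 Hy Hy' HM HA. pose proof (lam_bounds _ Hs). pose proof (f_pos _ y Hs Hy).
  set (c := / (lam (fst s) * f (fst s) y)).
  set (P := weight (fst s) y j * Kvar_exp (rpow (Rabs (snd s)) alpha) + weight (fst s) y' j * Kvar_f).
  set (t := rpow (Rabs (y - y')) alpha).
  assert (Hc : 0 < c) by (apply Rinv_0_lt_compat; nra).
  destruct (I j) eqn:Ej.
  - replace (cweight s j y * phi (h j y) - cweight s j y' * phi (h j y'))%C with
      (cweight s j y * (phi (h j y) - phi (h j y')) + (cweight s j y - cweight s j y') * phi (h j y'))%C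
      by ring.
    eapply Rle_trans; [apply Cmod_triangle|]. rewrite !Cmod_mult, Cmod_cweight by auto.
    pose proof (weight_ge_0 _ y j Hs Hy).
    apply Rle_trans with (weight (fst s) y j * c * A + c * t * P * M); [|right; ring].
    apply Rplus_le_compat; apply Rmult_le_compat; auto using Cmod_ge_0.
    + unfold Rdiv. fold c. apply Rmult_le_pos; lra.
    + unfold Rdiv. fold c. lra.
    + apply cweight_var; auto.
    + apply HM, h_in01; auto.
  - unfold P, weight. rewrite Ej. replace (RtoC 0 - RtoC 0)%C with (RtoC 0) by ring.
    rewrite Cmod_R, Rabs_R0. right; ring.
Qed.

Lemma Lop_holder s (phi : R -> C) M A y y' :
  Rabs (fst s) < eps1 -> Rabs (fst s) <= 1 -> in01 y -> in01 y' ->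
  (forall x, in01 x -> Cmod (phi x) <= M) ->
  (forall j, I j = true -> Cmod (phi (h j y) - phi (h j y'))%C <= A) ->
  Cmod (Lop I h r lam f s phi y - Lop I h r lam f s phi y')%C <=
    A + M * Bc * (1 + rpow (Rabs (snd s)) alpha) * rpow (Rabs (y - y')) alpha.
Proof.
  intros Hs Hs1 Hy Hy' HM HA.
  rewrite (Lop_csum s phi M y), (Lop_csum s phi M y'), <- csum_minus
    by (try apply (csummable_Lop_terms s phi M); auto).
  set (sg := fst s). set (t := rpow (Rabs (y - y')) alpha). set (rb := rpow (Rabs (snd s)) alpha).
  set (L := lam sg). set (fy := f sg y). set (fy' := f sg y').
  assert (HL : 0 < L) by apply (lam_bounds sg Hs).
  assert (Hfy : Kf_inf <= fy) by (apply f_ge_Kf_inf; auto).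
  assert (Hfy' : fy' <= Kf_sup) by (apply f_le_Kf_sup; auto).
  pose proof Kf_inf_pos. pose proof (bound_ge_0 phi M HM).
  assert (Ht : 0 <= t) by apply rpow_ge_0. assert (Hrb : 0 <= rb) by apply rpow_ge_0.
  set (K1 := / (L * fy) * (A + t * M * Kvar_exp rb)). set (K2 := / (L * fy) * (t * M * Kvar_f)).
  eapply Rle_trans.
  { apply (Cmod_csum_le _ (fun j => weight sg y j * K1 + weight sg y' j * K2)).
    - intros j. eapply Rle_trans; [apply (Lop_term_var s phi M A y y' j); auto|].
      right. fold sg t rb L fy. unfold K1, K2. ring.
    - apply (ex_series_plus (fun j => weight sg y j * K1) (fun j => weight sg y' j * K2));
        apply ex_series_scal_r, ex_series_weight; auto. }
  rewrite Series_plus, !Series_scal_r, !Series_weight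
    by (first [apply ex_series_scal_r, ex_series_weight | idtac]; auto).
  fold L fy fy'. unfold K1, K2.
  replace (L * fy * (/ (L * fy) * (A + t * M * Kvar_exp rb)) + L * fy' * (/ (L * fy) * (t * M * Kvar_f)))
    with (A + t * M * (Kvar_exp rb + fy' / fy * Kvar_f)) by (field; lra).
  assert (Hratio : 0 <= fy' / fy <= Kf_sup / Kf_inf).
  { assert (0 < fy') by (apply f_pos; auto). split; [apply Rdiv_le_0_compat; lra|].
    apply Rmult_le_compat; try lra; [left; apply Rinv_0_lt_compat; lra | apply Rinv_le_contravar; lra]. }
  pose proof (Kvar_le_Bc rb (fy' / fy) Hrb Hratio).
  assert (0 <= t * M) by nra.
  apply Rplus_le_compat_l. replace (M * Bc * (1 + rb) * t) with (t * M * (Bc * (1 + rb))) by ring.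
  apply Rmult_le_compat_l; auto.
Qed.

(* [A0 + K / (1 - rhoa)] dominates the fixed point of [A |-> rhoa * (A + K)], the recursion
   given by [Lop_holder] and [rpow_adapted_dist_contract]. *)
Lemma Lpow_bounds s psi M A0 n :
  Rabs (fst s) < eps1 -> Rabs (fst s) <= 1 -> 0 <= A0 ->
  (forall x, in01 x -> Cmod (psi x) <= M) ->
  (forall j x z, I j = true -> in01 x -> in01 z ->
     Cmod (psi (h j x) - psi (h j z))%C <= A0 * rpow (adapted_dist x z) alpha) ->
  (forall x, in01 x -> Cmod (Lpow I h r lam f s n psi x) <= M) /\
  (forall j x z, I j = true -> in01 x -> in01 z ->
     Cmod (Lpow I h r lam f s n psi (h j x) - Lpow I h r lam f s n psi (h j z))%C <=
     (A0 + M * Bc * (1 + rpow (Rabs (snd s)) alpha) / (1 - rhoa)) * rpow (adapted_dist x z) alpha).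
Proof.
  intros Hs Hs1 HA0 HM Hpsi.
  set (K := M * Bc * (1 + rpow (Rabs (snd s)) alpha)). set (As := A0 + K / (1 - rhoa)).
  pose proof (bound_ge_0 psi M HM). pose proof Bc_ge_0. pose proof rhoa_range.
  assert (HK : 0 <= K).
  { pose proof (rpow_ge_0 (Rabs (snd s)) alpha).
    unfold K. apply Rmult_le_pos; [apply Rmult_le_pos|]; lra. }
  assert (HKs : 0 <= K / (1 - rhoa)) by (apply Rdiv_le_0_compat; lra).
  assert (Hfix : (As + K) * rhoa <= As).
  { assert (E : As - (As + K) * rhoa = (A0 + K) * (1 - rhoa)) by (unfold As; field; lra).
    assert (0 <= (A0 + K) * (1 - rhoa)) by (apply Rmult_le_pos; lra). lra. }
  induction n as [|n [IHsup IHhol]].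
  - split; auto. intros j x z Hj Hx Hz. eapply Rle_trans; [apply Hpsi; auto|].
    apply Rmult_le_compat_r; [apply rpow_ge_0 | unfold As; lra].
  - split; [intros x Hx; apply Lop_sup_le; auto|].
    intros j x z Hj Hx Hz. simpl.
    set (y := h j x). set (y' := h j z).
    assert (Hy : in01 y) by (apply h_in01; auto). assert (Hy' : in01 y') by (apply h_in01; auto).
    pose proof (rpow_dist_le_adapted y y' Hy Hy') as Hdist.
    pose proof (rpow_adapted_dist_contract j x z Hj Hx Hz) as Hcontract. fold y y' in Hcontract.
    pose proof (rpow_ge_0 (adapted_dist y y') alpha). pose proof (rpow_ge_0 (adapted_dist x z) alpha).
    eapply Rle_trans.
    { apply (Lop_holder s _ M (As * rpow (adapted_dist y y') alpha)); auto. }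
    fold K. apply Rle_trans with ((As + K) * rpow (adapted_dist y y') alpha).
    { apply (Rmult_le_compat_l K) in Hdist; auto. lra. }
    apply Rle_trans with ((As + K) * (rhoa * rpow (adapted_dist x z) alpha)).
    + apply Rmult_le_compat_l; [unfold As; lra | auto].
    + rewrite <- Rmult_assoc. apply Rmult_le_compat_r; auto.
Qed.

Definition K_normb : R := 1 + rpow Cd alpha * (1 + Bc / (1 - rhoa)).

Lemma K_normb_gt_1 : 1 < K_normb.
Proof.
  pose proof Bc_ge_0. pose proof rhoa_range.
  pose proof (rpow_ge_1 Cd alpha ltac:(pose proof alpha_range; lra) Cd_ge_1).
  assert (0 <= Bc / (1 - rhoa)) by (apply Rdiv_le_0_compat; lra). unfold K_normb. nra.
Qed.

Lemma Lpow_normb_le s n psi : Rabs (fst s) < eps1 -> Rabs (fst s) <= 1 -> in_Calpha I h alpha psi ->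
  in_Calpha I h alpha (Lpow I h r lam f s n psi) /\
  normb I h alpha (snd s) (Lpow I h r lam f s n psi) <= K_normb * normb I h alpha (snd s) psi.
Proof.
  intros Hs Hs1 Hpsi.
  set (M := sup_norm psi). set (hl := holder_loc I h alpha psi). set (A0 := Rmax 0 hl).
  set (rb := rpow (Rabs (snd s)) alpha). set (Cda := rpow Cd alpha).
  set (As := A0 + M * Bc * (1 + rb) / (1 - rhoa)).
  assert (HM : forall x, in01 x -> Cmod (psi x) <= M)
    by (intros; apply (Cmod_le_sup_norm I h alpha); auto).
  pose proof (bound_ge_0 psi M HM). pose proof (Rmax_l 0 hl). pose proof (Rmax_r 0 hl).
  pose proof Bc_ge_0. pose proof rhoa_range. assert (Hrb : 0 <= rb) by apply rpow_ge_0.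
  assert (HCda : 1 <= Cda) by (apply rpow_ge_1; [pose proof alpha_range; lra | apply Cd_ge_1]).
  assert (HBr : 0 <= Bc / (1 - rhoa)) by (apply Rdiv_le_0_compat; lra).
  assert (HAs : 0 <= As).
  { assert (0 <= M * Bc * (1 + rb) / (1 - rhoa))
      by (apply Rdiv_le_0_compat; [apply Rmult_le_pos; nra | lra]).
    unfold As, A0. lra. }
  destruct (Lpow_bounds s psi M A0 n Hs Hs1 ltac:(unfold A0; lra) HM)
    as [Hsup Hhol]; [intros; apply holder_loc_adapted; auto|]. fold rb As in Hhol.
  destruct (in_Calpha_normb_le I h alpha (snd s) (Lpow I h r lam f s n psi) M (As * Cda))
    as [Hin Hnorm]; auto; [apply Rmult_le_pos; lra| |].
  { intros v (j & x & z & Hj & Hx & Hz & Hxz & ->). apply Rle_div_l; [apply exp_pos|].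
    eapply Rle_trans; [apply Hhol; auto|]. rewrite <- rpow_Rpower by (apply Rabs_pos_lt; lra).
    rewrite Rmult_assoc. apply Rmult_le_compat_l; auto. apply rpow_adapted_dist_le; auto. }
  split; auto. fold rb in Hnorm. eapply Rle_trans; [exact Hnorm|].
  unfold normb. fold M hl rb. set (N := Rmax M (hl / (1 + rb))).
  assert (HMN : M <= N) by apply Rmax_l. assert (HhN : hl / (1 + rb) <= N) by apply Rmax_r.
  assert (HA0N : A0 / (1 + rb) <= N).
  { unfold A0, Rmax at 1. destruct (Rle_dec 0 hl); auto. unfold Rdiv. rewrite Rmult_0_l. lra. }
  assert (Hdiv : As * Cda / (1 + rb) <= Cda * (1 + Bc / (1 - rhoa)) * N).
  { replace (As * Cda / (1 + rb)) with (Cda * (A0 / (1 + rb) + M * (Bc / (1 - rhoa))))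
      by (unfold As; field; lra).
    rewrite Rmult_assoc. apply Rmult_le_compat_l; [lra|]. nra. }
  assert (0 <= Cda * (1 + Bc / (1 - rhoa)) * N) by (apply Rmult_le_pos; nra).
  unfold K_normb. fold Cda. apply Rmax_lub; nra.
Qed.

End GivenLowerBound.

End NormalisedTransferOperator.

Theorem corollary6p6
  (alpha C0 rho eps0 : R) (I : nat -> bool) (a b : nat -> R)
  (F : R -> R) (h : nat -> R -> R) (r : R -> R)
  (lam : R -> R) (f : R -> R -> R) (eps1 : R) :
  Setting alpha C0 rho eps0 I a b F h r ->
  EigenFamily alpha eps0 I h r lam f eps1 ->
  exists eps K : R, 0 < eps < 1 /\ 1 < K /\
    forall (sigma bb : R) (n : nat) (psi : R -> C),
      Rabs sigma < eps -> (1 <= n)%nat ->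
      in_Calpha I h alpha psi ->
      in_Calpha I h alpha (Lpow I h r lam f (sigma, bb) n psi) /\
      normb I h alpha bb (Lpow I h r lam f (sigma, bb) n psi)
        <= K * normb I h alpha bb psi.
Proof.
  intros HS HE.
  destruct (f0_lower_bound alpha C0 rho eps0 I a b F h r lam f eps1 HS HE) as (m0 & Hm0 & Hf0).
  pose proof (eps1_range alpha eps0 I h r lam f eps1 HE).
  assert (0 < Rmin eps1 1) by (apply Rmin_glb_lt; lra).
  pose proof (Rmin_l eps1 1). pose proof (Rmin_r eps1 1).
  exists (Rmin eps1 1 / 2), (K_normb alpha C0 rho f m0).
  split; [lra | split; [exact (K_normb_gt_1 alpha C0 rho eps0 I a b F h r lam f eps1 HS HE m0 Hm0)|]].
  (* the bound holds for every [n], including [n = 0] *)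
  intros sigma bb n psi Hsigma _ Hpsi.
  apply (Lpow_normb_le alpha C0 rho eps0 I a b F h r lam f eps1 HS HE m0 Hm0 Hf0 (sigma, bb));
    simpl; [lra | lra | exact Hpsi].
Qed.
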